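(* Assume (H3.1) and (H3.2). The function $\widetilde W(t,x):=\lim_{m\to\infty}W_m(t,x)$ (a nondecreasing limit; $\widetilde W$ is lower semicontinuous with at most linear growth) is a viscosity supersolution of $$\min\Big\{w(t,x)-h(t,x),\;-\partial_tw(t,x)-H^-(t,x,w,Dw,D^2w)\Big\}=0,\ (t,x)\in[0,T)\times\mathbb R^n,\qquad w(T,x)=\Phi(x).$$
   Context: Setting. Fix $T>0$. Let $\Omega=C_0([0,T];\mathbb R^d)$, $P$ the Wiener measure, $B$ the coordinate Brownian motion, $\mathbb F=(\mathcal F_s)$ its $P$-augmented natural filtration. $U,V$ are compact metric spaces. $b:[0,T]\times\mathbb R^n\times U\times V\to\mathbb R^n$ and $\sigma:[0,T]\times\mathbb R^n\times U\times V\to\mathbb R^{n\times d}$ satisfy (H3.1): for each $x$ they are continuous in $(t,u,v)$, and Lipschitz in $x$ uniformly in $(t,u,v)$. $\Phi:\mathbb R^n\to\mathbb R$, $h:[0,T]\times\mathbb R^n\to\mathbb R$, $f:[0,T]\times\mathbb R^n\times\mathbb R\times\mathbb R^d\times U\times V\to\mathbb R$ satisfy (H3.2): for each $(x,y,z)$, $f(\cdot,x,y,z,\cdot,\cdot)$ is continuous in $(t,u,v)$ and $f$ is Lipschitz in $(x,y,z)$ uniformly in $(t,u,v)$; $\Phi$ is Lipschitz; $h(\cdot,x)$ is continuous for each $x$, $h$ is Lipschitz in $x$ uniformly in $t$, and $h(T,x)\le\Phi(x)$. $\mathcal U_{t,s}$, $\mathcal V_{t,s}$ are the sets of $U$-,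 resp. $V$-valued progressively measurable processes on $[t,s]$; $\mathcal B_{t,s}$ is the set of nonanticipative strategies $\beta:\mathcal U_{t,s}\to\mathcal V_{t,s}$. $X^{t,x;u,v}$ solves $dX_s=b(s,X_s,u_s,v_s)ds+\sigma(s,X_s,u_s,v_s)dB_s$, $X_t=x$. For $m\in\mathbb N$, $({}^mY^{t,x;u,v},{}^mZ^{t,x;u,v})$ solves the BSDE ${}^mY_s=\Phi(X^{t,x;u,v}_T)+\int_s^T f(r,X^{t,x;u,v}_r,{}^mY_r,{}^mZ_r,u_r,v_r)dr+m\int_s^T({}^mY_r-h(r,X^{t,x;u,v}_r))^-dr-\int_s^T{}^mZ_rdB_r$, $s\in[t,T]$; $W_m(t,x)=\operatorname{essinf}_{\beta\in\mathcal B_{t,T}}\operatorname{esssup}_{u\in\mathcal U_{t,T}}{}^mY^{t,x;u,\beta(u)}_t$. Each $W_m$ is deterministic, continuous, of linear growth, nondecreasing in $m$, and is the viscosity solution of $-\partial_tW_m-\sup_u\inf_v\{\tfrac12\mathrm{tr}(\sigma\sigma^TD^2W_m)+DW_m\cdot b+f(t,x,W_m,DW_m\sigma,u,v)+m(W_m-h(t,x))^-\}=0$, $W_m(T,\cdot)=\Phi$. Hamiltonian: $H^-(t,x,y,q,X)=\sup_{u\in U}\inf_{v\in V}\{\tfrac12\mathrm{tr}(\sigma\sigma^T(t,x,u,v)X)+q\cdot b(t,x,u,v)+f(t,x,y,q\sigma(t,x,u,v),u,v)\}$. Supersolution: a lower semicontinuous $w$ is a viscosity supersolution if $w(T,x)\ge\Phi(x)$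 for all $x$ and, for every $\varphi\in C^3_{l,b}([0,T]\times\mathbb R^n)$ ($C^3$ with bounded derivatives of orders 1–3) such that $w-\varphi$ attains a local minimum at $(t,x)\in[0,T)\times\mathbb R^n$, $\min\{w(t,x)-h(t,x),-\partial_t\varphi(t,x)-H^-(t,x,w(t,x),D\varphi(t,x),D^2\varphi(t,x))\}\ge0$. *)

From Stdlib Require Import Reals ClassicalEpsilon.
Open Scope R_scope.

(** * Conventions
    Points of R^k are represented as [nat -> R] vanishing at indices >= k
    ([vec k x]); matrices as [nat -> nat -> R] (only entries inside the
    relevant index ranges are ever used). *)

Fixpoint rsum (k : nat) (g : nat -> R) : R :=
  match k with O => 0 | S j => rsum j g + g j end.

Definition vec (k : nat) (x : nat -> R) : Prop := forall i, (k <= i)%nat -> x i = 0.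
Definition vnorm (k : nat) (x : nat -> R) : R := rsum k (fun i => Rabs (x i)).
Definition vdist (k : nat) (x y : nat -> R) : R := vnorm k (fun i => x i - y i).
Definition mdist (k l : nat) (A B : nat -> nat -> R) : R :=
  rsum k (fun i => rsum l (fun j => Rabs (A i j - B i j))).

Definition Rsup (E : R -> Prop) : R := epsilon (inhabits 0) (fun s => is_lub E s).
Definition Rinf (E : R -> Prop) : R := - Rsup (fun y => E (- y)).
Definition supinf {U V : Type} (G : U -> V -> R) : R :=
  Rsup (fun y => exists u, y = Rinf (fun z => exists v, z = G u v)).

Definition negpart (a : R) : R := Rmax 0 (- a).

Definition is_metric (U : Type) (dU : U -> U -> R) : Prop :=
  (forall a b, 0 <= dU a b) /\ (forall a b, dU a b = 0 <-> a = b) /\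
  (forall a b, dU a b = dU b a) /\ (forall a b c, dU a c <= dU a b + dU b c).
Definition seq_compact (U : Type) (dU : U -> U -> R) : Prop :=
  forall s : nat -> U, exists (phi : nat -> nat) (l : U),
    (forall k, (phi k < phi (S k))%nat) /\ Un_cv (fun k => dU (s (phi k)) l) 0.
Definition compact_metric_space (U : Type) (dU : U -> U -> R) : Prop :=
  inhabited U /\ is_metric U dU /\ seq_compact U dU.

Definition H3_1 (T : R) (n d : nat) (U V : Type) (dU : U -> U -> R) (dV : V -> V -> R)
  (b : R -> (nat -> R) -> U -> V -> (nat -> R))
  (sig : R -> (nat -> R) -> U -> V -> nat -> nat -> R) : Prop :=
  (forall x, vec n x -> forall t u v, 0 <= t <= T -> forall eps, eps > 0 ->
     exists del, del > 0 /\ forall t' u' v', 0 <= t' <= T -> Rabs (t' - t) < del ->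
       dU u' u < del -> dV v' v < del ->
       vdist n (b t' x u' v') (b t x u v) < eps /\
       mdist n d (sig t' x u' v') (sig t x u v) < eps) /\
  (exists L, forall t x x' u v, 0 <= t <= T -> vec n x -> vec n x' ->
     vdist n (b t x u v) (b t x' u v) <= L * vdist n x x' /\
     mdist n d (sig t x u v) (sig t x' u v) <= L * vdist n x x').

Definition H3_2 (T : R) (n d : nat) (U V : Type) (dU : U -> U -> R) (dV : V -> V -> R)
  (f : R -> (nat -> R) -> R -> (nat -> R) -> U -> V -> R)
  (Phi : (nat -> R) -> R) (h : R -> (nat -> R) -> R) : Prop :=
  (forall x y z, vec n x -> vec d z -> forall t u v, 0 <= t <= T -> forall eps, eps > 0 ->
     exists del, del > 0 /\ forall t' u' v', 0 <= t' <= T -> Rabs (t' - t) < del ->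
       dU u' u < del -> dV v' v < del ->
       Rabs (f t' x y z u' v' - f t x y z u v) < eps) /\
  (exists L, forall t x x' y y' z z' u v, 0 <= t <= T -> vec n x -> vec n x' ->
     vec d z -> vec d z' ->
     Rabs (f t x y z u v - f t x' y' z' u v)
       <= L * (vdist n x x' + Rabs (y - y') + vdist d z z')) /\
  (exists L, forall x x', vec n x -> vec n x' -> Rabs (Phi x - Phi x') <= L * vdist n x x') /\
  (forall x, vec n x -> forall t, 0 <= t <= T -> forall eps, eps > 0 ->
     exists del, del > 0 /\ forall t', 0 <= t' <= T -> Rabs (t' - t) < del ->
       Rabs (h t' x - h t x) < eps) /\
  (exists L, forall t x x', 0 <= t <= T -> vec n x -> vec n x' ->
     Rabs (h t x - h t x') <= L * vdist n x x') /\
  (forall x, vec n x -> h T x <= Phi x).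

(* tr(s s^T X) for s : n x d, X : n x n *)
Definition trace_term (n d : nat) (s X : nat -> nat -> R) : R :=
  rsum n (fun i => rsum n (fun j => rsum d (fun k => s i k * s j k) * X j i)).
Definition dotv (n : nat) (q p : nat -> R) : R := rsum n (fun i => q i * p i).
(* the row vector q s in R^d *)
Definition qsig (n d : nat) (q : nat -> R) (s : nat -> nat -> R) : nat -> R :=
  fun k => if Nat.ltb k d then rsum n (fun i => q i * s i k) else 0.

Definition Hinner {U V : Type} (n d : nat)
  (b : R -> (nat -> R) -> U -> V -> (nat -> R))
  (sig : R -> (nat -> R) -> U -> V -> nat -> nat -> R)
  (f : R -> (nat -> R) -> R -> (nat -> R) -> U -> V -> R)
  (t : R) (x : nat -> R) (y : R) (q : nat -> R) (X : nat -> nat -> R) (u : U) (v : V) : R :=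
  / 2 * trace_term n d (sig t x u v) X + dotv n q (b t x u v)
  + f t x y (qsig n d q (sig t x u v)) u v.

Definition Hminus {U V : Type} (n d : nat) b sig f t x y q X : R :=
  supinf (fun (u : U) (v : V) => @Hinner U V n d b sig f t x y q X u v).

(* Hamiltonian of the penalized equation (penalty inside sup inf, as in the paper) *)
Definition Hpen {U V : Type} (n d : nat) b sig f (h : R -> (nat -> R) -> R) (m : nat)
  t x y q X : R :=
  supinf (fun (u : U) (v : V) =>
    @Hinner U V n d b sig f t x y q X u v + INR m * negpart (y - h t x)).

(** * Test functions C^3_{l,b}
    Coordinate 0 is time, coordinate (S i) is x_i (i < n). *)
Definition move (a : nat) (t : R) (x : nat -> R) (hh : R) (g : R -> (nat -> R) -> R) : R :=
  match a with
  | O => g (t + hh) x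
  | S i => g t (fun j => if Nat.eqb j i then x j + hh else x j)
  end.
Definition coord (n a : nat) : Prop := (a <= n)%nat.
Definition partial (n a : nat) (g g' : R -> (nat -> R) -> R) : Prop :=
  forall t x, vec n x -> derivable_pt_lim (fun hh => move a t x hh g) 0 (g' t x).
Definition contF (n : nat) (g : R -> (nat -> R) -> R) : Prop :=
  forall t x, vec n x -> forall eps, eps > 0 -> exists del, del > 0 /\
    forall s y, vec n y -> Rabs (s - t) < del -> vdist n y x < del ->
      Rabs (g s y - g t x) < eps.

Definition C3lb (T : R) (n : nat) (phi : R -> (nat -> R) -> R)
  (D1 : nat -> R -> (nat -> R) -> R) (D2 : nat -> nat -> R -> (nat -> R) -> R)
  (D3 : nat -> nat -> nat -> R -> (nat -> R) -> R) : Prop :=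
  contF n phi /\
  (forall a, coord n a -> partial n a phi (D1 a) /\ contF n (D1 a)) /\
  (forall a a', coord n a -> coord n a' -> partial n a' (D1 a) (D2 a a') /\ contF n (D2 a a')) /\
  (forall a a' a'', coord n a -> coord n a' -> coord n a'' ->
     partial n a'' (D2 a a') (D3 a a' a'') /\ contF n (D3 a a' a'')) /\
  (exists M, forall a a' a'', coord n a -> coord n a' -> coord n a'' ->
     forall t x, 0 <= t <= T -> vec n x ->
       Rabs (D1 a t x) <= M /\ Rabs (D2 a a' t x) <= M /\ Rabs (D3 a a' a'' t x) <= M).

Definition loc_min (T : R) (n : nat) (g : R -> (nat -> R) -> R) (t : R) (x : nat -> R) : Prop :=
  exists del, del > 0 /\ forall s y, 0 <= s <= T -> vec n y -> Rabs (s - t) < del ->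
    vdist n y x < del -> g t x <= g s y.
Definition loc_max (T : R) (n : nat) (g : R -> (nat -> R) -> R) (t : R) (x : nat -> R) : Prop :=
  loc_min T n (fun s y => - g s y) t x.

Definition lsc (T : R) (n : nat) (w : R -> (nat -> R) -> R) : Prop :=
  forall t x, 0 <= t <= T -> vec n x -> forall eps, eps > 0 -> exists del, del > 0 /\
    forall s y, 0 <= s <= T -> vec n y -> Rabs (s - t) < del -> vdist n y x < del ->
      w t x - eps < w s y.
Definition contD (T : R) (n : nat) (w : R -> (nat -> R) -> R) : Prop :=
  forall t x, 0 <= t <= T -> vec n x -> forall eps, eps > 0 -> exists del, del > 0 /\
    forall s y, 0 <= s <= T -> vec n y -> Rabs (s - t) < del -> vdist n y x < del ->
      Rabs (w s y - w t x) < eps.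
Definition lin_growth (T : R) (n : nat) (w : R -> (nat -> R) -> R) : Prop :=
  exists C, forall t x, 0 <= t <= T -> vec n x -> Rabs (w t x) <= C * (1 + vnorm n x).

Definition visc_sol_pen {U V : Type} (T : R) (n d : nat) b sig f
  (Phi : (nat -> R) -> R) (h : R -> (nat -> R) -> R) (m : nat) (w : R -> (nat -> R) -> R) : Prop :=
  (forall x, vec n x -> w T x = Phi x) /\
  (forall phi D1 D2 D3, C3lb T n phi D1 D2 D3 -> forall t x, 0 <= t < T -> vec n x ->
     loc_max T n (fun s y => w s y - phi s y) t x ->
     - D1 O t x - @Hpen U V n d b sig f h m t x (w t x)
         (fun i => D1 (S i) t x) (fun i j => D2 (S i) (S j) t x) <= 0) /\
  (forall phi D1 D2 D3, C3lb T n phi D1 D2 D3 -> forall t x, 0 <= t < T -> vec n x ->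
     loc_min T n (fun s y => w s y - phi s y) t x ->
     - D1 O t x - @Hpen U V n d b sig f h m t x (w t x)
         (fun i => D1 (S i) t x) (fun i j => D2 (S i) (S j) t x) >= 0).

Definition visc_super_obst {U V : Type} (T : R) (n d : nat) b sig f
  (Phi : (nat -> R) -> R) (h : R -> (nat -> R) -> R) (w : R -> (nat -> R) -> R) : Prop :=
  lsc T n w /\
  (forall x, vec n x -> w T x >= Phi x) /\
  (forall phi D1 D2 D3, C3lb T n phi D1 D2 D3 -> forall t x, 0 <= t < T -> vec n x ->
     loc_min T n (fun s y => w s y - phi s y) t x ->
     Rmin (w t x - h t x)
          (- D1 O t x - @Hminus U V n d b sig f t x (w t x)
              (fun i => D1 (S i) t x) (fun i j => D2 (S i) (S j) t x)) >= 0).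

(** Lower semicontinuity holds because Wt is a supremum of continuous
    functions, and Wt(T,.) = Phi because every W_m equals Phi at time T.  For the
    differential inequality, let Wt - phi have a local minimum at (t,x) with t < T.
    Subtracting a smooth bump psi vanishing only at (t,x) makes the minimum strict
    on a small compact cylinder K around (t,x).  Minimizers (s_m,y_m) of W_m - (phi - psi)
    on K exist (extreme value theorem); by monotonicity of W_m and strictness they
    converge, along a subsequence, to (t,x), with W_m(s_m,y_m) -> Wt(t,x).  There the
    penalized equation gives  m (W_m - h)^- <= - D_t(phi - psi) - H^-(...).  Since H^- is
    continuous in its arguments (continuity of the coefficients and compactness of
    U x V), the right-hand side converges; hence the limit operator is nonnegative
    and (Wt - h)^- = 0. *)

From Stdlib Require Import Reals ClassicalEpsilon Lra Lia Classical FunctionalExtensionality.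
Open Scope R_scope.

Lemma rsum_ext k g g' : (forall i, (i < k)%nat -> g i = g' i) -> rsum k g = rsum k g'.
Proof.
  revert g g'; induction k as [|k IH]; intros g g' H; simpl; auto.
  rewrite (IH g g'), H; auto; intros; apply H; lia.
Qed.

Lemma rsum_plus k g g' : rsum k (fun i => g i + g' i) = rsum k g + rsum k g'.
Proof. induction k as [|k IH]; simpl; [lra | rewrite IH; lra]. Qed.

Lemma rsum_zero k : rsum k (fun _ => 0) = 0.
Proof. induction k as [|k IH]; simpl; [lra | rewrite IH; lra]. Qed.

Lemma rsum_nonneg k g : (forall i, (i < k)%nat -> 0 <= g i) -> 0 <= rsum k g.
Proof.
  induction k as [|k IH]; intros H; simpl; [lra|].
  assert (0 <= rsum k g) by (apply IH; intros; apply H; lia).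
  assert (0 <= g k) by (apply H; lia). lra.
Qed.

Lemma rsum_le_mono k g g' : (forall i, (i < k)%nat -> g i <= g' i) -> rsum k g <= rsum k g'.
Proof.
  induction k as [|k IH]; intros H; simpl; [lra|].
  assert (rsum k g <= rsum k g') by (apply IH; intros; apply H; lia).
  assert (g k <= g' k) by (apply H; lia). lra.
Qed.

Lemma rsum_term k g i :
  (forall j, (j < k)%nat -> 0 <= g j) -> (i < k)%nat -> g i <= rsum k g.
Proof.
  induction k as [|k IH]; intros H Hi; [lia|]. simpl.
  destruct (Nat.eq_dec i k) as [->|Hik].
  - assert (0 <= rsum k g) by (apply rsum_nonneg; intros; apply H; lia). lra.
  - assert (g i <= rsum k g) by (apply IH; [intros; apply H; lia | lia]).
    assert (0 <= g k) by (apply H; lia). lra.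
Qed.

Lemma rsum_delta k i c :
  (i < k)%nat -> rsum k (fun j => if Nat.eqb j i then c else 0) = c.
Proof.
  induction k as [|k IH]; intros Hi; [lia|]. simpl.
  destruct (Nat.eq_dec i k) as [->|Hik].
  - rewrite Nat.eqb_refl, (rsum_ext k _ (fun _ => 0)), rsum_zero; [lra|].
    intros j Hj. destruct (Nat.eqb_spec j k); [lia | auto].
  - rewrite IH by lia. destruct (Nat.eqb_spec k i); [lia | lra].
Qed.

Lemma rsum_cv k (a : nat -> nat -> R) (l : nat -> R) :
  (forall i, (i < k)%nat -> Un_cv (fun j => a j i) (l i)) ->
  Un_cv (fun j => rsum k (a j)) (rsum k l).
Proof.
  induction k as [|k IH]; intros H; simpl.
  - intros e He; exists O; intros; unfold R_dist; rewrite Rminus_diag, Rabs_R0; lra.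
  - apply CV_plus; [apply IH; intros; apply H; lia | apply H; lia].
Qed.

Lemma rsum_derive k (F : nat -> R -> R) F' x :
  (forall i, (i < k)%nat -> derivable_pt_lim (F i) x (F' i)) ->
  derivable_pt_lim (fun hh => rsum k (fun i => F i hh)) x (rsum k F').
Proof.
  induction k as [|k IH]; intros H; simpl.
  - apply (derivable_pt_lim_const 0).
  - apply (derivable_pt_lim_plus (fun hh => rsum k (fun i => F i hh)) (F k));
      [apply IH; intros; apply H; lia | apply H; lia].
Qed.

Lemma vdist_nonneg n x y : 0 <= vdist n x y.
Proof. apply rsum_nonneg; intros; apply Rabs_pos. Qed.

Lemma vdist_sym n x y : vdist n x y = vdist n y x.
Proof. apply rsum_ext; intros; apply Rabs_minus_sym. Qed.

Lemma vdist_self n x : vdist n x x = 0.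
Proof.
  unfold vdist, vnorm; rewrite (rsum_ext _ _ (fun _ => 0)); [apply rsum_zero|].
  intros; rewrite Rminus_diag, Rabs_R0; auto.
Qed.

Lemma vdist_tri n x y z : vdist n x z <= vdist n x y + vdist n y z.
Proof.
  unfold vdist, vnorm; rewrite <- rsum_plus; apply rsum_le_mono; intros.
  replace (x i - z i) with ((x i - y i) + (y i - z i)) by ring. apply Rabs_triang.
Qed.

Lemma vdist_coord n x y i : (i < n)%nat -> Rabs (x i - y i) <= vdist n x y.
Proof. intros; apply (rsum_term n (fun i => Rabs (x i - y i))); auto; intros; apply Rabs_pos. Qed.

Lemma vnorm_coord n x i : (i < n)%nat -> Rabs (x i) <= vnorm n x.
Proof. intros; apply (rsum_term n (fun i => Rabs (x i))); auto; intros; apply Rabs_pos. Qed.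

Lemma mdist_nonneg n d A B : 0 <= mdist n d A B.
Proof. apply rsum_nonneg; intros; apply rsum_nonneg; intros; apply Rabs_pos. Qed.

Lemma mdist_tri n d A B C : mdist n d A C <= mdist n d A B + mdist n d B C.
Proof.
  unfold mdist; rewrite <- rsum_plus; apply rsum_le_mono; intros.
  rewrite <- rsum_plus; apply rsum_le_mono; intros.
  replace (A i i0 - C i i0) with ((A i i0 - B i i0) + (B i i0 - C i i0)) by ring.
  apply Rabs_triang.
Qed.

Lemma mdist_coord n d A B i k :
  (i < n)%nat -> (k < d)%nat -> Rabs (A i k - B i k) <= mdist n d A B.
Proof.
  intros Hi Hk; unfold mdist.
  eapply Rle_trans;
    [| apply (rsum_term n (fun i => rsum d (fun j => Rabs (A i j - B i j))))].
  - apply (rsum_term d (fun j => Rabs (A i j - B i j))); auto; intros; apply Rabs_pos.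
  - intros; apply rsum_nonneg; intros; apply Rabs_pos.
  - auto.
Qed.

Lemma abs_le a b : Rabs a <= b -> - b <= a <= b.
Proof. unfold Rabs; destruct (Rcase_abs a); lra. Qed.

Lemma abs_lt a b : Rabs a < b -> - b < a < b.
Proof. unfold Rabs; destruct (Rcase_abs a); lra. Qed.

Lemma cv_abs0 u l : Un_cv u l <-> Un_cv (fun j => Rabs (u j - l)) 0.
Proof.
  split; intros H e He; destruct (H e He) as [N HN]; exists N; intros j Hj;
    specialize (HN j Hj); unfold R_dist in *; rewrite Rminus_0_r, Rabs_Rabsolu in *; auto.
Qed.

Lemma cv_const c : Un_cv (fun _ => c) c.
Proof. intros e He; exists O; intros; unfold R_dist; rewrite Rminus_diag, Rabs_R0; lra. Qed.

Lemma cv_squeeze0 u a : (forall j, 0 <= u j <= a j) -> Un_cv a 0 -> Un_cv u 0.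
Proof.
  intros H Ha e He; destruct (Ha e He) as [N HN]; exists N; intros j Hj.
  specialize (HN j Hj); specialize (H j); unfold R_dist in *; rewrite Rminus_0_r in *.
  rewrite Rabs_right in * by lra. lra.
Qed.

Lemma cv_of_bound (a : nat -> R) l (c : nat -> R) :
  (forall k, Rabs (a k - l) <= c k) -> Un_cv c 0 -> Un_cv a l.
Proof.
  intros H Hc; apply cv_abs0, (cv_squeeze0 _ c); auto.
  intros; split; [apply Rabs_pos | auto].
Qed.

Lemma cv_lin2 L (a b : nat -> R) : Un_cv a 0 -> Un_cv b 0 -> Un_cv (fun k => L * a k + b k) 0.
Proof.
  intros; replace 0 with (L * 0 + 0) by ring.
  apply CV_plus; auto; apply CV_mult; auto; apply cv_const.
Qed.

Lemma cv_le_ev a b la lb :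
  (exists N, forall j, (N <= j)%nat -> a j <= b j) -> Un_cv a la -> Un_cv b lb -> la <= lb.
Proof.
  intros [N H] Ha Hb.
  apply (@Rle_cv_lim (fun j => a (j + N)%nat) (fun j => b (j + N)%nat)).
  - intros; apply H; lia.
  - apply CV_shift'; auto.
  - apply CV_shift'; auto.
Qed.

Lemma cv_bounded u l : Un_cv u l -> exists M, forall j, Rabs (u j) <= M.
Proof.
  intros H. destruct (maj_by_pos u (exist _ l H)) as [M [_ HM]]. eauto.
Qed.

Lemma inv_small e : 0 < e -> exists K, forall k, (K <= k)%nat -> / (INR k + 1) < e.
Proof.
  intros He. destruct (archimed_cor1 e He) as [K [HK HK0]]. exists K; intros k Hk.
  assert (INR K <= INR k) by (apply le_INR; auto).
  assert (0 < INR K) by (apply lt_0_INR; auto).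
  apply Rle_lt_trans with (/ INR K); auto. apply Rinv_le_contravar; lra.
Qed.

Lemma cv_inv : Un_cv (fun k => / (INR k + 1)) 0.
Proof.
  intros e He. destruct (inv_small e He) as [K HK]. exists K; intros k Hk.
  unfold R_dist; rewrite Rminus_0_r, Rabs_right; [apply HK; auto|].
  apply Rle_ge, Rlt_le, Rinv_0_lt_compat. pose proof (pos_INR k); lra.
Qed.

Lemma nat_large B : exists k, B < INR k.
Proof.
  destruct (INR_unbounded B) as [k Hk]. eauto.
Qed.

Definition incr (s : nat -> nat) : Prop := forall k, (s k < s (S k))%nat.

Lemma incr_strict s : incr s -> forall a b, (a < b)%nat -> (s a < s b)%nat.
Proof. intros H a b Hab; induction Hab; [apply H | specialize (H m); lia]. Qed.

Lemma incr_comp s t : incr s -> incr t -> incr (fun k => s (t k)).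
Proof. intros Hs Ht k; apply incr_strict; auto. Qed.

Lemma incr_ge s : incr s -> forall k, (k <= s k)%nat.
Proof. intros H; induction k; [lia | specialize (H k); lia]. Qed.

Lemma sub_cv u l (s : nat -> nat) : Un_cv u l -> (forall k, (k <= s k)%nat) -> Un_cv (fun k => u (s k)) l.
Proof.
  intros H Hs e He; destruct (H e He) as [N HN]; exists N; intros; apply HN.
  specialize (Hs n); lia.
Qed.

Lemma bw_real (u : nat -> R) M : (forall j, Rabs (u j) <= M) ->
  exists s l, incr s /\ Un_cv (fun k => u (s k)) l.
Proof.
  intros HM.
  destruct (Bolzano_Weierstrass u (fun c => -M <= c <= M) (compact_P3 (-M) M)) as [l Hl].
  { intros j; specialize (HM j); apply abs_le in HM; lra. }
  assert (Hp : forall N k, exists p, (N <= p)%nat /\ Rabs (u p - l) < / (INR k + 1)).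
  { intros N k.
    assert (Hpos : 0 < / (INR k + 1)) by (apply Rinv_0_lt_compat; pose proof (pos_INR k); lra).
    destruct (Hl (disc l (mkposreal _ Hpos)) N) as [p [Hp1 Hp2]].
    - exists (mkposreal _ Hpos); intros y Hy; exact Hy.
    - exists p; split; auto. }
  pose (pick := fun N k => proj1_sig (constructive_indefinite_description _ (Hp N k))).
  assert (Hpick : forall N k, (N <= pick N k)%nat /\ Rabs (u (pick N k) - l) < / (INR k + 1)).
  { intros; unfold pick; destruct (constructive_indefinite_description _ (Hp N k)); auto. }
  pose (s := fix s k := match k with O => pick O O | S k => pick (S (s k)) (S k) end).
  exists s, l; split.
  - intros k; simpl. destruct (Hpick (S (s k)) (S k)); lia.
  - intros e He. destruct (inv_small e He) as [K HK]. exists K; intros k Hk. unfold R_dist.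
    apply Rlt_trans with (/ (INR k + 1)); [| apply HK; auto].
    destruct k; simpl; apply Hpick.
Qed.

Lemma bw_finite K (w : nat -> nat -> R) M : (forall j i, (i < K)%nat -> Rabs (w j i) <= M) ->
  exists s z, incr s /\ forall i, (i < K)%nat -> Un_cv (fun k => w (s k) i) (z i).
Proof.
  induction K as [|K IH]; intros HM.
  - exists (fun k => k), (fun _ => 0); split; [intros k; lia | intros; lia].
  - destruct IH as [s [z [Hs Hz]]]; [intros; apply HM; lia|].
    destruct (bw_real (fun k => w (s k) K) M) as [s2 [l [Hs2 Hl]]]; [intros; apply HM; lia|].
    exists (fun k => s (s2 k)), (fun i => if Nat.eqb i K then l else z i); split.
    + apply incr_comp; auto.
    + intros i Hi. destruct (Nat.eqb_spec i K) as [->|HiK]; auto.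
      apply (sub_cv (fun k => w (s k) i)); [apply Hz; lia | apply incr_ge; auto].
Qed.

Lemma vdist_cv0 n (ys : nat -> nat -> R) y :
  (forall i, (i < n)%nat -> Un_cv (fun k => ys k i) (y i)) -> Un_cv (fun k => vdist n (ys k) y) 0.
Proof.
  intros H; unfold vdist, vnorm; rewrite <- (rsum_zero n).
  apply (rsum_cv n (fun k i => Rabs (ys k i - y i)) (fun _ => 0)).
  intros i Hi; exact (proj1 (cv_abs0 _ _) (H i Hi)).
Qed.

Lemma bw_point n (ss : nat -> R) (ys : nat -> nat -> R) M :
  (forall j, Rabs (ss j) <= M) -> (forall j i, (i < n)%nat -> Rabs (ys j i) <= M) ->
  exists sg s0 y0, incr sg /\ vec n y0 /\ Un_cv (fun k => ss (sg k)) s0 /\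
     Un_cv (fun k => vdist n (ys (sg k)) y0) 0.
Proof.
  intros H1 H2.
  destruct (bw_finite (S n) (fun j i => match i with O => ss j | S i => ys j i end) M)
    as [sg [z [Hsg Hz]]].
  { intros j [|i] Hi; auto. apply H2; lia. }
  exists sg, (z O), (fun i => if Nat.ltb i n then z (S i) else 0).
  split; [auto | split; [| split]].
  - intros i Hi. destruct (Nat.ltb_spec i n); auto; lia.
  - apply (Hz O); lia.
  - apply vdist_cv0. intros i Hi. destruct (Nat.ltb_spec i n); [| lia]. apply (Hz (S i)); lia.
Qed.

Lemma bw_controls U V (dU : U -> U -> R) (dV : V -> V -> R) :
  compact_metric_space U dU -> compact_metric_space V dV ->
  forall (us : nat -> U) (vs : nat -> V), exists sg u v, incr sg /\
    Un_cv (fun k => dU (us (sg k)) u) 0 /\ Un_cv (fun k => dV (vs (sg k)) v) 0.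
Proof.
  intros [_ [_ HU]] [_ [_ HV]] us vs.
  destruct (HU us) as [s1 [u [Hs1 Hu]]].
  destruct (HV (fun k => vs (s1 k))) as [s2 [v [Hs2 Hv]]].
  exists (fun k => s1 (s2 k)), u, v. split; [apply incr_comp; auto | split; auto].
  apply (sub_cv (fun k => dU (us (s1 k)) u)); auto. apply incr_ge; auto.
Qed.

Lemma contF_seq n g ss ys s y : contF n g -> vec n y -> (forall j, vec n (ys j)) ->
  Un_cv ss s -> Un_cv (fun j => vdist n (ys j) y) 0 -> Un_cv (fun j => g (ss j) (ys j)) (g s y).
Proof.
  intros Hg Hy Hys Hs Hv e He. destruct (Hg s y Hy e He) as [del [Hd H]].
  destruct (Hs del Hd) as [N1 H1]. destruct (Hv del Hd) as [N2 H2].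
  exists (max N1 N2); intros j Hj. unfold R_dist. apply H; auto.
  - apply H1; lia.
  - specialize (H2 j ltac:(lia)). unfold R_dist in H2. rewrite Rminus_0_r in H2.
    pose proof (RRle_abs (vdist n (ys j) y)); lra.
Qed.

Lemma contD_seq T n g ss ys s y : contD T n g -> 0 <= s <= T -> vec n y ->
  (forall j, vec n (ys j)) -> (forall j, 0 <= ss j <= T) ->
  Un_cv ss s -> Un_cv (fun j => vdist n (ys j) y) 0 -> Un_cv (fun j => g (ss j) (ys j)) (g s y).
Proof.
  intros Hg Hs0 Hy Hys Hss Hs Hv e He. destruct (Hg s y Hs0 Hy e He) as [del [Hd H]].
  destruct (Hs del Hd) as [N1 H1]. destruct (Hv del Hd) as [N2 H2].
  exists (max N1 N2); intros j Hj. unfold R_dist. apply H; auto.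
  - apply H1; lia.
  - specialize (H2 j ltac:(lia)). unfold R_dist in H2. rewrite Rminus_0_r in H2.
    pose proof (RRle_abs (vdist n (ys j) y)); lra.
Qed.

Lemma cont_to_seq {U V : Type} (dU : U -> U -> R) (dV : V -> V -> R)
  (D : R -> U -> V -> R) T t u v ts us vs :
  (forall k, 0 <= ts k <= T) -> Un_cv ts t ->
  Un_cv (fun k => dU (us k) u) 0 -> Un_cv (fun k => dV (vs k) v) 0 ->
  (forall k, 0 <= D (ts k) (us k) (vs k)) ->
  (forall eps, eps > 0 -> exists del, del > 0 /\ forall t' u' v', 0 <= t' <= T ->
     Rabs (t' - t) < del -> dU u' u < del -> dV v' v < del -> D t' u' v' < eps) ->
  Un_cv (fun k => D (ts k) (us k) (vs k)) 0.
Proof.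
  intros Hts Ht Hu Hv HD Hc e He.
  destruct (Hc e He) as [del [Hdel H]].
  destruct (Ht del Hdel) as [N1 H1]. destruct (Hu del Hdel) as [N2 H2].
  destruct (Hv del Hdel) as [N3 H3].
  exists (max N1 (max N2 N3)); intros k Hk. unfold R_dist in *.
  rewrite Rminus_0_r, Rabs_right by (apply Rle_ge; auto).
  specialize (H2 k ltac:(lia)); specialize (H3 k ltac:(lia)); rewrite Rminus_0_r in H2, H3.
  pose proof (RRle_abs (dU (us k) u)); pose proof (RRle_abs (dV (vs k) v)).
  apply H; auto; [apply H1; lia | lra | lra].
Qed.

Lemma Rsup_spec E : bound E -> (exists x, E x) -> is_lub E (Rsup E).
Proof.
  intros Hb Hn; unfold Rsup; apply epsilon_spec.
  destruct (completeness E Hb Hn) as [m Hm]; eauto.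
Qed.

Section SupInf.
Context {U V : Type}.
Hypotheses (HU : inhabited U) (HV : inhabited V).

Definition infv (g : V -> R) : R := Rinf (fun z => exists v, z = g v).
Definition supu (k : U -> R) : R := Rsup (fun y => exists u, y = k u).

Lemma supinf_eq (G : U -> V -> R) : supinf G = supu (fun u => infv (G u)).
Proof. reflexivity. Qed.

Lemma infv_lub g : (exists M, forall v, M <= g v) ->
  is_lub (fun y => exists v, - y = g v) (- infv g).
Proof.
  intros [M HM]. unfold infv, Rinf; rewrite Ropp_involutive. apply Rsup_spec.
  - exists (- M). intros y [w Hw]. specialize (HM w). lra.
  - destruct HV as [v0]. exists (- g v0), v0. ring.
Qed.

Lemma infv_le g : (exists M, forall v, M <= g v) -> forall v, infv g <= g v.
Proof.
  intros Hb v. destruct (infv_lub g Hb) as [H1 _].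
  assert (- g v <= - infv g) by (apply H1; exists v; ring). lra.
Qed.

Lemma infv_ge g c : (exists M, forall v, M <= g v) -> (forall v, c <= g v) -> c <= infv g.
Proof.
  intros Hb Hc. destruct (infv_lub g Hb) as [_ H2].
  assert (- infv g <= - c); [| lra].
  apply H2. intros y [w Hw]. specialize (Hc w). lra.
Qed.

Lemma supu_lub k : (exists M, forall u, k u <= M) -> is_lub (fun y => exists u, y = k u) (supu k).
Proof.
  intros [M HM]. apply Rsup_spec.
  - exists M. intros y [w ->]. auto.
  - destruct HU as [u0]. exists (k u0), u0; auto.
Qed.

Lemma supu_ge k : (exists M, forall u, k u <= M) -> forall u, k u <= supu k.
Proof. intros Hb u. apply (proj1 (supu_lub k Hb)). exists u; auto. Qed.

Lemma supu_le k c : (exists M, forall u, k u <= M) -> (forall u, k u <= c) -> supu k <= c.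
Proof. intros Hb Hc. apply (proj2 (supu_lub k Hb)). intros y [w ->]; auto. Qed.

Lemma infv_bounds (G : U -> V -> R) M : (forall u v, Rabs (G u v) <= M) ->
  (forall u, exists m, forall v, m <= G u v) /\ (exists m, forall u, infv (G u) <= m).
Proof.
  intros HG. assert (Hlb : forall u, exists m, forall v, m <= G u v).
  { intros u; exists (- M); intros v; specialize (HG u v); apply abs_le in HG; lra. }
  split; auto. destruct HV as [v0]. exists M; intros u.
  apply Rle_trans with (G u v0); [apply infv_le; auto|].
  specialize (HG u v0); apply abs_le in HG; lra.
Qed.

Lemma supinf_lip (G G' : U -> V -> R) M e :
  (forall u v, Rabs (G u v) <= M) -> (forall u v, Rabs (G' u v) <= M) ->
  (forall u v, Rabs (G u v - G' u v) <= e) -> Rabs (supinf G - supinf G') <= e.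
Proof.
  intros HG HG' He. rewrite !supinf_eq.
  assert (Hone : forall K K' : U -> V -> R,
    (forall u v, Rabs (K u v) <= M) -> (forall u v, Rabs (K' u v) <= M) ->
    (forall u v, Rabs (K u v - K' u v) <= e) ->
    supu (fun u => infv (K u)) <= supu (fun u => infv (K' u)) + e).
  { intros K K' HK HK' HKe.
    destruct (infv_bounds K M HK) as [Hlb Hub]. destruct (infv_bounds K' M HK') as [Hlb' Hub'].
    apply supu_le; auto. intros u.
    assert (infv (K u) - e <= infv (K' u)).
    { apply infv_ge; auto. intros v. pose proof (infv_le (K u) (Hlb u) v).
      specialize (HKe u v); apply abs_le in HKe; lra. }
    pose proof (supu_ge (fun u => infv (K' u)) Hub' u). simpl in *. lra. }
  apply Rabs_le. split.
  - pose proof (Hone G' G HG' HG ltac:(intros u v; rewrite Rabs_minus_sym; auto)). lra.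
  - pose proof (Hone G G' HG HG' He). lra.
Qed.

Lemma supinf_shift (G : U -> V -> R) M c : (forall u v, Rabs (G u v) <= M) ->
  supinf (fun u v => G u v + c) = supinf G + c.
Proof.
  intros HG. rewrite !supinf_eq. destruct (infv_bounds G M HG) as [Hlb [m Hm]].
  assert (Hi : forall u, infv (fun v => G u v + c) = infv (G u) + c).
  { intros u. destruct (Hlb u) as [m' Hm'].
    assert (Hb : exists M', forall v, M' <= G u v + c) by (exists (m' + c); intros w; specialize (Hm' w); lra).
    apply Rle_antisym.
    - cut (infv (fun v => G u v + c) - c <= infv (G u)); [lra|]. apply infv_ge; [apply Hlb|].
      intros v. pose proof (infv_le (fun v => G u v + c) Hb v). simpl in *. lra.
    - apply infv_ge; auto. intros v. pose proof (infv_le (G u) (Hlb u) v). lra. }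
  rewrite (functional_extensionality _ _ Hi).
  assert (Hb : exists M', forall u, infv (G u) + c <= M') by (exists (m + c); intros w; specialize (Hm w); lra).
  apply Rle_antisym.
  - apply supu_le; auto. intros u. pose proof (supu_ge (fun u => infv (G u)) (ex_intro _ m Hm) u).
    simpl in *; lra.
  - cut (supu (fun u => infv (G u)) <= supu (fun u => infv (G u) + c) - c); [lra|].
    apply supu_le; [exists m; auto|]. intros u.
    pose proof (supu_ge (fun u => infv (G u) + c) Hb u). simpl in *; lra.
Qed.
End SupInf.

Section Compactness.
Context {U V : Type} (dU : U -> U -> R) (dV : V -> V -> R).
Hypotheses (HU : compact_metric_space U dU) (HV : compact_metric_space V dV).

Definition seq_cont_conv (Gs : nat -> U -> V -> R) (G : U -> V -> R) : Prop :=
  forall (sg : nat -> nat) us u vs v, (forall k, (k <= sg k)%nat) ->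
    Un_cv (fun k => dU (us k) u) 0 -> Un_cv (fun k => dV (vs k) v) 0 ->
    Un_cv (fun k => Gs (sg k) (us k) (vs k)) (G u v).

Lemma seq_cont_bounded G : seq_cont_conv (fun _ => G) G -> exists M, forall u v, Rabs (G u v) <= M.
Proof.
  intros HG. apply NNPP; intros Hn.
  assert (Hp : forall j : nat, exists p : U * V, INR j < Rabs (G (fst p) (snd p))).
  { intros j. apply NNPP; intros Hj. apply Hn. exists (INR j). intros u v.
    apply Rnot_lt_le. intros Hl. apply Hj. exists (u, v); auto. }
  pose (ps := fun j => proj1_sig (constructive_indefinite_description _ (Hp j))).
  assert (Hps : forall j, INR j < Rabs (G (fst (ps j)) (snd (ps j)))).
  { intros j; unfold ps; destruct (constructive_indefinite_description _ (Hp j)); auto. }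
  destruct (bw_controls U V dU dV HU HV (fun j => fst (ps j)) (fun j => snd (ps j)))
    as [sg [u [v [Hsg [Hu Hv]]]]].
  pose proof (HG (fun k => k) _ u _ v (fun k => le_n k) Hu Hv) as Hc.
  destruct (cv_bounded _ _ Hc) as [B HB]. destruct (nat_large B) as [k Hk].
  specialize (HB k). specialize (Hps (sg k)). pose proof (le_INR _ _ (incr_ge sg Hsg k)).
  simpl in HB. lra.
Qed.

Lemma seq_cont_unif Gs G : seq_cont_conv Gs G -> seq_cont_conv (fun _ => G) G ->
  forall e, 0 < e -> exists N, forall j, (N <= j)%nat -> forall u v, Rabs (Gs j u v - G u v) < e.
Proof.
  intros HGs HG e He. apply NNPP; intros Hn.
  assert (Hp : forall N : nat, exists p : nat * (U * V), (N <= fst p)%nat /\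
    e <= Rabs (Gs (fst p) (fst (snd p)) (snd (snd p)) - G (fst (snd p)) (snd (snd p)))).
  { intros N. apply NNPP; intros HN. apply Hn. exists N. intros j Hj u v.
    apply Rnot_le_lt. intros Hl. apply HN. exists (j, (u, v)); simpl; auto. }
  pose (ps := fun j => proj1_sig (constructive_indefinite_description _ (Hp j))).
  assert (Hps : forall N, (N <= fst (ps N))%nat /\ e <= Rabs (Gs (fst (ps N)) (fst (snd (ps N)))
      (snd (snd (ps N))) - G (fst (snd (ps N))) (snd (snd (ps N))))).
  { intros j; unfold ps; destruct (constructive_indefinite_description _ (Hp j)); auto. }
  destruct (bw_controls U V dU dV HU HV (fun j => fst (snd (ps j))) (fun j => snd (snd (ps j))))
    as [sg [u [v [Hsg [Hu Hv]]]]].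
  assert (Hge : forall k, (k <= fst (ps (sg k)))%nat).
  { intros k. pose proof (incr_ge sg Hsg k). destruct (Hps (sg k)). lia. }
  pose proof (HGs (fun k => fst (ps (sg k))) _ u _ v Hge Hu Hv) as H1.
  pose proof (HG (fun k => k) _ u _ v (fun k => le_n k) Hu Hv) as H2.
  pose proof (CV_minus _ _ _ _ H1 H2) as H3. rewrite Rminus_diag in H3.
  destruct (H3 e He) as [N HN]. specialize (HN N (le_n N)).
  unfold R_dist in HN. rewrite Rminus_0_r in HN.
  destruct (Hps (sg N)) as [_ HH]. lra.
Qed.
End Compactness.

Lemma qsig_vec n d q s : vec d (qsig n d q s).
Proof. intros k Hk; unfold qsig; destruct (Nat.ltb_spec k d); auto; lia. Qed.

Section Hamiltonian.
Context {U V : Type} (dU : U -> U -> R) (dV : V -> V -> R) (T : R) (n d : nat)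
  (b : R -> (nat -> R) -> U -> V -> (nat -> R))
  (sig : R -> (nat -> R) -> U -> V -> nat -> nat -> R)
  (f : R -> (nat -> R) -> R -> (nat -> R) -> U -> V -> R).
Hypotheses (HU : compact_metric_space U dU) (HV : compact_metric_space V dV).
Hypothesis Hbc : forall x, vec n x -> forall t u v, 0 <= t <= T -> forall eps, eps > 0 ->
  exists del, del > 0 /\ forall t' u' v', 0 <= t' <= T -> Rabs (t' - t) < del ->
    dU u' u < del -> dV v' v < del ->
    vdist n (b t' x u' v') (b t x u v) < eps /\ mdist n d (sig t' x u' v') (sig t x u v) < eps.
Variable Lb : R.
Hypothesis Hbl : forall t x x' u v, 0 <= t <= T -> vec n x -> vec n x' ->
  vdist n (b t x u v) (b t x' u v) <= Lb * vdist n x x' /\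
  mdist n d (sig t x u v) (sig t x' u v) <= Lb * vdist n x x'.
Hypothesis Hfc : forall x y z, vec n x -> vec d z -> forall t u v, 0 <= t <= T ->
  forall eps, eps > 0 -> exists del, del > 0 /\ forall t' u' v', 0 <= t' <= T ->
    Rabs (t' - t) < del -> dU u' u < del -> dV v' v < del ->
    Rabs (f t' x y z u' v' - f t x y z u v) < eps.
Variable Lf : R.
Hypothesis Hfl : forall t x x' y y' z z' u v, 0 <= t <= T -> vec n x -> vec n x' ->
  vec d z -> vec d z' ->
  Rabs (f t x y z u v - f t x' y' z' u v) <= Lf * (vdist n x x' + Rabs (y - y') + vdist d z z').

Section Sequences.
Variables (ts : nat -> R) (xs : nat -> nat -> R) (us : nat -> U) (vs : nat -> V)
  (t : R) (x : nat -> R) (u : U) (v : V).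
Hypotheses (Ht : 0 <= t <= T) (Hx : vec n x) (Hts : forall k, 0 <= ts k <= T)
  (Hxs : forall k, vec n (xs k)) (Ct : Un_cv ts t) (Cx : Un_cv (fun k => vdist n (xs k) x) 0)
  (Cu : Un_cv (fun k => dU (us k) u) 0) (Cv : Un_cv (fun k => dV (vs k) v) 0).

(* Drift and volatility converge entrywise: continuity in (t,u,v), Lipschitz in x. *)
Lemma coeff_cv :
  (forall i, (i < n)%nat -> Un_cv (fun k => b (ts k) (xs k) (us k) (vs k) i) (b t x u v i)) /\
  (forall i kk, (i < n)%nat -> (kk < d)%nat ->
     Un_cv (fun k => sig (ts k) (xs k) (us k) (vs k) i kk) (sig t x u v i kk)).
Proof.
  assert (Cb : Un_cv (fun k => vdist n (b (ts k) x (us k) (vs k)) (b t x u v)) 0).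
  { apply (cont_to_seq dU dV (fun t' u' v' => vdist n (b t' x u' v') (b t x u v)) T t u v);
      auto using vdist_nonneg.
    intros e He. destruct (Hbc x Hx t u v Ht e He) as [del [Hd H]].
    exists del; split; auto. intros; apply H; auto. }
  assert (Cs : Un_cv (fun k => mdist n d (sig (ts k) x (us k) (vs k)) (sig t x u v)) 0).
  { apply (cont_to_seq dU dV (fun t' u' v' => mdist n d (sig t' x u' v') (sig t x u v)) T t u v);
      auto using mdist_nonneg.
    intros e He. destruct (Hbc x Hx t u v Ht e He) as [del [Hd H]].
    exists del; split; auto. intros; apply H; auto. }
  split.
  - intros i Hi. apply (cv_of_bound _ _ (fun k => Lb * vdist n (xs k) x
      + vdist n (b (ts k) x (us k) (vs k)) (b t x u v))); [| apply cv_lin2; auto].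
    intros k. eapply Rle_trans; [apply (vdist_coord n _ _ i Hi)|].
    eapply Rle_trans; [apply (vdist_tri n _ (b (ts k) x (us k) (vs k)))|].
    destruct (Hbl (ts k) (xs k) x (us k) (vs k)); auto. lra.
  - intros i kk Hi Hkk. apply (cv_of_bound _ _ (fun k => Lb * vdist n (xs k) x
      + mdist n d (sig (ts k) x (us k) (vs k)) (sig t x u v))); [| apply cv_lin2; auto].
    intros k. eapply Rle_trans; [apply (mdist_coord n d _ _ i kk Hi Hkk)|].
    eapply Rle_trans; [apply (mdist_tri n d _ (sig (ts k) x (us k) (vs k)))|].
    destruct (Hbl (ts k) (xs k) x (us k) (vs k)); auto. lra.
Qed.

Lemma driver_cv (ys : nat -> R) (zs : nat -> nat -> R) y z :
  vec d z -> (forall k, vec d (zs k)) -> Un_cv ys y -> Un_cv (fun k => vdist d (zs k) z) 0 ->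
  Un_cv (fun k => f (ts k) (xs k) (ys k) (zs k) (us k) (vs k)) (f t x y z u v).
Proof.
  intros Hz Hzs Cy Cz.
  assert (Cf0 : Un_cv (fun k => Rabs (f (ts k) x y z (us k) (vs k) - f t x y z u v)) 0).
  { apply (cont_to_seq dU dV (fun t' u' v' => Rabs (f t' x y z u' v' - f t x y z u v)) T t u v);
      auto using Rabs_pos. }
  apply (cv_of_bound _ _ (fun k => Lf * (vdist n (xs k) x + Rabs (ys k - y) + vdist d (zs k) z)
     + Rabs (f (ts k) x y z (us k) (vs k) - f t x y z u v))).
  - intros k.
    replace (f (ts k) (xs k) (ys k) (zs k) (us k) (vs k) - f t x y z u v) with
      ((f (ts k) (xs k) (ys k) (zs k) (us k) (vs k) - f (ts k) x y z (us k) (vs k))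
       + (f (ts k) x y z (us k) (vs k) - f t x y z u v)) by ring.
    eapply Rle_trans; [apply Rabs_triang|]. apply Rplus_le_compat_r, Hfl; auto.
  - apply cv_lin2; auto. replace 0 with (0 + 0 + 0) by ring.
    apply CV_plus; [apply CV_plus|]; auto. apply (proj1 (cv_abs0 _ _)); auto.
Qed.

Lemma Hinner_cv (ys : nat -> R) (qs : nat -> nat -> R) (Xs : nat -> nat -> nat -> R)
  y (q : nat -> R) (X : nat -> nat -> R) :
  Un_cv ys y -> (forall i, (i < n)%nat -> Un_cv (fun k => qs k i) (q i)) ->
  (forall i i', (i < n)%nat -> (i' < n)%nat -> Un_cv (fun k => Xs k i i') (X i i')) ->
  Un_cv (fun k => Hinner n d b sig f (ts k) (xs k) (ys k) (qs k) (Xs k) (us k) (vs k))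
        (Hinner n d b sig f t x y q X u v).
Proof.
  intros Cy Cq CX. destruct coeff_cv as [Cb Cs].
  pose (sk := fun k => sig (ts k) (xs k) (us k) (vs k)).
  assert (Cz : Un_cv (fun k => vdist d (qsig n d (qs k) (sk k)) (qsig n d q (sig t x u v))) 0).
  { apply vdist_cv0. intros kk Hkk. unfold qsig. destruct (Nat.ltb_spec kk d); [| lia].
    apply (rsum_cv n (fun k i => qs k i * sk k i kk)). intros i Hi. apply CV_mult; auto.
    apply Cs; auto. }
  unfold Hinner. apply CV_plus; [apply CV_plus|].
  - apply CV_mult; [apply cv_const|]. unfold trace_term.
    apply (rsum_cv n (fun k i => rsum n (fun j => rsum d (fun kk => sk k i kk * sk k j kk) * Xs k j i))).
    intros i Hi. apply (rsum_cv n (fun k j => rsum d (fun kk => sk k i kk * sk k j kk) * Xs k j i)).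
    intros j Hj. apply CV_mult; auto.
    apply (rsum_cv d (fun k kk => sk k i kk * sk k j kk)). intros kk Hkk; apply CV_mult; apply Cs; auto.
  - unfold dotv. apply (rsum_cv n (fun k i => qs k i * b (ts k) (xs k) (us k) (vs k) i)).
    intros i Hi; apply CV_mult; auto.
  - apply driver_cv; auto; [apply qsig_vec | intros; apply qsig_vec].
Qed.
End Sequences.

Section Data.
Variables (ts : nat -> R) (xs : nat -> nat -> R) (ys : nat -> R) (qs : nat -> nat -> R)
  (Xs : nat -> nat -> nat -> R) (t : R) (x : nat -> R) (y : R) (q : nat -> R) (X : nat -> nat -> R).
Hypotheses (Ht : 0 <= t <= T) (Hx : vec n x) (Hts : forall j, 0 <= ts j <= T)
  (Hxs : forall j, vec n (xs j)) (Ct : Un_cv ts t) (Cx : Un_cv (fun j => vdist n (xs j) x) 0)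
  (Cy : Un_cv ys y) (Cq : forall i, (i < n)%nat -> Un_cv (fun j => qs j i) (q i))
  (CX : forall i i', (i < n)%nat -> (i' < n)%nat -> Un_cv (fun j => Xs j i i') (X i i')).

Lemma Hinner_seq_cont :
  seq_cont_conv dU dV (fun j u v => Hinner n d b sig f (ts j) (xs j) (ys j) (qs j) (Xs j) u v)
    (fun u v => Hinner n d b sig f t x y q X u v).
Proof.
  intros sg us u vs v Hsg Hu Hv.
  apply (Hinner_cv (fun k => ts (sg k)) (fun k => xs (sg k)) us vs); auto.
  - apply sub_cv; auto.
  - apply (sub_cv (fun j => vdist n (xs j) x)); auto.
  - apply sub_cv; auto.
  - intros; apply (sub_cv (fun j => qs j i)); auto.
  - intros; apply (sub_cv (fun j => Xs j i i')); auto.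
Qed.
End Data.

Lemma Hinner_seq_cont_const t x y q X : 0 <= t <= T -> vec n x ->
  seq_cont_conv dU dV (fun _ u v => Hinner n d b sig f t x y q X u v)
    (fun u v => Hinner n d b sig f t x y q X u v).
Proof.
  intros Ht Hx. apply (Hinner_seq_cont (fun _ => t) (fun _ => x) (fun _ => y) (fun _ => q) (fun _ => X));
    auto; try (intros; apply cv_const).
  rewrite <- (vdist_self n x). apply cv_const.
Qed.

Lemma Hinner_bounded t x y q X : 0 <= t <= T -> vec n x ->
  exists M, forall u v, Rabs (Hinner n d b sig f t x y q X u v) <= M.
Proof. intros. apply (seq_cont_bounded dU dV HU HV), Hinner_seq_cont_const; auto. Qed.

(* The penalty term does not depend on the controls, so it leaves sup inf. *)
Lemma Hpen_shift h m t x y q X : 0 <= t <= T -> vec n x ->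
  @Hpen U V n d b sig f h m t x y q X = @Hminus U V n d b sig f t x y q X + INR m * negpart (y - h t x).
Proof.
  intros Ht Hx. destruct (Hinner_bounded t x y q X Ht Hx) as [M HM].
  apply (supinf_shift (proj1 HU) (proj1 HV) _ M); auto.
Qed.

Lemma Hminus_cv ts xs ys qs Xs t x y q X :
  0 <= t <= T -> vec n x -> (forall j, 0 <= ts j <= T) -> (forall j, vec n (xs j)) ->
  Un_cv ts t -> Un_cv (fun j => vdist n (xs j) x) 0 -> Un_cv ys y ->
  (forall i, (i < n)%nat -> Un_cv (fun j => qs j i) (q i)) ->
  (forall i i', (i < n)%nat -> (i' < n)%nat -> Un_cv (fun j => Xs j i i') (X i i')) ->
  Un_cv (fun j => @Hminus U V n d b sig f (ts j) (xs j) (ys j) (qs j) (Xs j))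
        (@Hminus U V n d b sig f t x y q X).
Proof.
  intros Ht Hx Hts Hxs Ct Cx Cy Cq CX.
  pose proof (Hinner_seq_cont ts xs ys qs Xs t x y q X Ht Hx Hts Hxs Ct Cx Cy Cq CX) as HS.
  destruct (Hinner_bounded t x y q X Ht Hx) as [M HM].
  intros e He.
  destruct (seq_cont_unif dU dV HU HV _ _ HS (Hinner_seq_cont_const t x y q X Ht Hx) (Rmin (e/2) 1))
    as [N HN]; [apply Rmin_pos; lra|].
  exists N; intros j Hj. unfold R_dist, Hminus.
  pose proof (Rmin_l (e/2) 1); pose proof (Rmin_r (e/2) 1).
  apply Rle_lt_trans with (Rmin (e/2) 1); [| lra].
  apply (supinf_lip (proj1 HU) (proj1 HV) _ _ (M + 1)).
  - intros u v. specialize (HN j Hj u v). specialize (HM u v).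
    pose proof (Rabs_triang_inv (Hinner n d b sig f (ts j) (xs j) (ys j) (qs j) (Xs j) u v)
      (Hinner n d b sig f t x y q X u v)). lra.
  - intros u v; specialize (HM u v); lra.
  - intros u v; specialize (HN j Hj u v); lra.
Qed.
End Hamiltonian.

(** A smooth nonnegative bump [psi] vanishing only at a given point (t0,x0):
    psi(s,y) = (1 - cos (s - t0))^2 + sum_i (1 - cos (y_i - x0_i))^2.
    Subtracting it from a test function turns a local minimum into a strict one,
    without leaving the class C^3_{l,b} and without changing first and second
    derivatives at (t0,x0). *)

Lemma dpl_eq f g x l l' : (forall z, f z = g z) -> l = l' ->
  derivable_pt_lim f x l -> derivable_pt_lim g x l'.
Proof. intros Hfg <- H. replace g with f by (apply functional_extensionality; auto). auto. Qed.

Definition bump0 z := (1 - cos z) * (1 - cos z).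
Definition bump1 z := 2 * (1 - cos z) * sin z.
Definition bump2 z := 2 * (sin z * sin z) + 2 * (1 - cos z) * cos z.
Definition bump3 z := 8 * sin z * cos z - 2 * sin z.
Definition bump4 z := 8 * (cos z * cos z - sin z * sin z) - 2 * cos z.

Lemma d_one_minus_cos z : derivable_pt_lim (fct_cte 1 - cos)%F z (0 - - sin z).
Proof. apply derivable_pt_lim_minus; [apply derivable_pt_lim_const | apply derivable_pt_lim_cos]. Qed.

Lemma d_bump0 z : derivable_pt_lim bump0 z (bump1 z).
Proof.
  eapply dpl_eq; [| | apply (derivable_pt_lim_mult _ _ z _ _ (d_one_minus_cos z) (d_one_minus_cos z))].
  - intros; unfold bump0, mult_fct, minus_fct, fct_cte; ring.
  - unfold bump1, plus_fct, mult_fct, minus_fct, fct_cte; ring.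
Qed.

Lemma d_bump1 z : derivable_pt_lim bump1 z (bump2 z).
Proof.
  eapply dpl_eq; [| | apply (derivable_pt_lim_mult _ _ z _ _
    (derivable_pt_lim_mult _ _ z _ _ (derivable_pt_lim_const 2 z) (d_one_minus_cos z))
    (derivable_pt_lim_sin z))].
  - intros; unfold bump1, mult_fct, minus_fct, fct_cte; ring.
  - unfold bump2, plus_fct, mult_fct, minus_fct, fct_cte; ring.
Qed.

Lemma d_bump2 z : derivable_pt_lim bump2 z (bump3 z).
Proof.
  eapply dpl_eq; [| | apply (derivable_pt_lim_plus _ _ z _ _
    (derivable_pt_lim_mult _ _ z _ _ (derivable_pt_lim_const 2 z)
       (derivable_pt_lim_mult _ _ z _ _ (derivable_pt_lim_sin z) (derivable_pt_lim_sin z)))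
    (derivable_pt_lim_mult _ _ z _ _
       (derivable_pt_lim_mult _ _ z _ _ (derivable_pt_lim_const 2 z) (d_one_minus_cos z))
       (derivable_pt_lim_cos z)))].
  - intros; unfold bump2, plus_fct, mult_fct, minus_fct, fct_cte; ring.
  - unfold bump3, plus_fct, mult_fct, minus_fct, fct_cte; ring.
Qed.

Lemma d_bump3 z : derivable_pt_lim bump3 z (bump4 z).
Proof.
  eapply dpl_eq; [| | apply (derivable_pt_lim_minus _ _ z _ _
    (derivable_pt_lim_mult _ _ z _ _
       (derivable_pt_lim_mult _ _ z _ _ (derivable_pt_lim_const 8 z) (derivable_pt_lim_sin z))
       (derivable_pt_lim_cos z))
    (derivable_pt_lim_mult _ _ z _ _ (derivable_pt_lim_const 2 z) (derivable_pt_lim_sin z)))].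
  - intros; unfold bump3, mult_fct, minus_fct, fct_cte; ring.
  - unfold bump4, plus_fct, mult_fct, minus_fct, fct_cte; ring.
Qed.

Lemma bump_derivs_bounded z : Rabs (bump1 z) <= 10 /\ Rabs (bump2 z) <= 10 /\ Rabs (bump3 z) <= 10.
Proof.
  pose proof (SIN_bound z); pose proof (COS_bound z).
  assert (-1 <= sin z * cos z <= 1) by (split; nra).
  assert (0 <= sin z * sin z <= 1) by (split; nra).
  assert (-2 <= (1 - cos z) * sin z <= 2) by (split; nra).
  assert (-2 <= (1 - cos z) * cos z <= 2) by (split; nra).
  unfold bump1, bump2, bump3; repeat split; apply Rabs_le; split; nra.
Qed.

Lemma bump0_nonneg z : 0 <= bump0 z.
Proof. unfold bump0; pose proof (Rle_0_sqr (1 - cos z)); unfold Rsqr in *; lra. Qed.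

Lemma bump_at_0 : bump0 0 = 0 /\ bump1 0 = 0 /\ bump2 0 = 0.
Proof. unfold bump0, bump1, bump2; rewrite sin_0, cos_0; repeat split; ring. Qed.

Lemma bump0_zero z : Rabs z <= 1 -> bump0 z <= 0 -> z = 0.
Proof.
  intros Hz H. assert (Hc : cos z = 1) by (unfold bump0 in H; nra).
  replace z with (2 * (z / 2)) in Hc by field. rewrite cos_2a_sin in Hc.
  assert (Hs : sin (z / 2) = 0) by nra. apply abs_le in Hz.
  destruct (Rtotal_order z 0) as [Hl | [He | Hg]]; auto.
  - assert (0 < sin (- (z / 2))) by (apply sin_pos_tech; lra). rewrite sin_neg in H0. lra.
  - assert (0 < sin (z / 2)) by (apply sin_pos_tech; lra). lra.
Qed.

Lemma cont_of_derivable g g' : (forall z, derivable_pt_lim g z (g' z)) ->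
  forall z eps, eps > 0 -> exists del, del > 0 /\ forall w, Rabs (w - z) < del -> Rabs (g w - g z) < eps.
Proof.
  intros Hd z eps He.
  assert (Hc : continuity_pt g z) by (apply derivable_continuous_pt; exact (exist _ (g' z) (Hd z))).
  destruct (Hc eps He) as [alp [Ha H]]. exists alp; split; auto. intros w Hw.
  destruct (Req_dec w z) as [->|Hwz]; [rewrite Rminus_diag, Rabs_R0; lra|].
  apply (H w). split; [split; [exact I | auto] | exact Hw].
Qed.

Definition pt_coord (a : nat) (s : R) (y : nat -> R) : R := match a with O => s | S i => y i end.

Lemma move_pt_coord a a' s y hh (K : R -> R) :
  move a' s y hh (fun s y => K (pt_coord a s y)) = K (pt_coord a s y + if Nat.eqb a a' then hh else 0).
Proof. destruct a as [|i], a' as [|i']; simpl; try (f_equal; ring). destruct (Nat.eqb i i'); f_equal; ring. Qed.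

Lemma move_rsum a' s y hh k (F : nat -> R -> (nat -> R) -> R) :
  move a' s y hh (fun s y => rsum k (fun a => F a s y)) = rsum k (fun a => move a' s y hh (F a)).
Proof. destruct a'; reflexivity. Qed.

Lemma move_const a' s y hh (c : R) : move a' s y hh (fun _ _ => c) = c.
Proof. destruct a'; reflexivity. Qed.

Lemma move_minus a s y hh g h : move a s y hh (fun s y => g s y - h s y) = move a s y hh g - move a s y hh h.
Proof. destruct a; reflexivity. Qed.

Lemma d_move g g' a a' s y c : (forall z, derivable_pt_lim g z (g' z)) ->
  derivable_pt_lim (fun hh => move a' s y hh (fun s y => g (pt_coord a s y - c))) 0
    (if Nat.eqb a a' then g' (pt_coord a s y - c) else 0).
Proof.
  intros Hd.
  eapply dpl_eq; [intros z; symmetry; apply (move_pt_coord a a' s y z (fun w => g (w - c))) | reflexivity|].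
  destruct (Nat.eqb a a').
  - eapply dpl_eq; [| | apply (derivable_pt_lim_comp (fun hh => pt_coord a s y + hh - c) g 0 1
      (g' (pt_coord a s y - c)))]; [intros; reflexivity | ring | |].
    + eapply dpl_eq; [| | apply (derivable_pt_lim_plus (fct_cte (pt_coord a s y - c)) id 0 0 1)];
        [intros; unfold plus_fct, fct_cte, id; ring | ring | apply derivable_pt_lim_const |
         apply derivable_pt_lim_id].
    + replace (pt_coord a s y + 0 - c) with (pt_coord a s y - c) by ring. apply Hd.
  - eapply dpl_eq; [| | apply (derivable_pt_lim_const (g (pt_coord a s y - c)) 0)];
      [intros; unfold fct_cte; f_equal; ring | reflexivity].
Qed.

Lemma contF_pt_coord n g g' a c : (forall z, derivable_pt_lim g z (g' z)) -> (a <= n)%nat ->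
  contF n (fun s y => g (pt_coord a s y - c)).
Proof.
  intros Hd Ha t x Hx eps He.
  destruct (cont_of_derivable g g' Hd (pt_coord a t x - c) eps He) as [del [Hdel H]].
  exists del; split; auto. intros s y Hy Hs Hyx. apply H.
  replace (pt_coord a s y - c - (pt_coord a t x - c)) with (pt_coord a s y - pt_coord a t x) by ring.
  destruct a as [|i]; simpl; auto.
  eapply Rle_lt_trans; [apply (vdist_coord n y x i); lia | eauto].
Qed.

Lemma contF_const n c : contF n (fun _ _ => c).
Proof. intros t x Hx eps He; exists 1; split; [lra|]; intros; rewrite Rminus_diag, Rabs_R0; lra. Qed.

Lemma contF_plus n g h : contF n g -> contF n h -> contF n (fun s y => g s y + h s y).
Proof.
  intros Hg Hh t x Hx e He.
  destruct (Hg t x Hx (e/2) ltac:(lra)) as [d1 [Hd1 H1]].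
  destruct (Hh t x Hx (e/2) ltac:(lra)) as [d2 [Hd2 H2]].
  exists (Rmin d1 d2); split; [apply Rmin_pos; lra|].
  intros s y Hy Hs Hyx. pose proof (Rmin_l d1 d2); pose proof (Rmin_r d1 d2).
  specialize (H1 s y Hy ltac:(lra) ltac:(lra)); specialize (H2 s y Hy ltac:(lra) ltac:(lra)).
  replace (g s y + h s y - (g t x + h t x)) with ((g s y - g t x) + (h s y - h t x)) by ring.
  eapply Rle_lt_trans; [apply Rabs_triang | lra].
Qed.

Lemma contF_opp n g : contF n g -> contF n (fun s y => - g s y).
Proof.
  intros Hg t x Hx e He. destruct (Hg t x Hx e He) as [del [Hd H]]. exists del; split; auto.
  intros s y Hy Hs Hyx. replace (- g s y - - g t x) with (- (g s y - g t x)) by ring.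
  rewrite Rabs_Ropp; auto.
Qed.

Lemma contF_minus n g h : contF n g -> contF n h -> contF n (fun s y => g s y - h s y).
Proof. intros Hg Hh. apply (contF_plus n g (fun s y => - h s y)); auto using contF_opp. Qed.

Lemma contF_rsum n k (F : nat -> R -> (nat -> R) -> R) : (forall a, (a < k)%nat -> contF n (F a)) ->
  contF n (fun s y => rsum k (fun a => F a s y)).
Proof.
  induction k as [|k IH]; intros H; simpl; [apply contF_const|].
  apply (contF_plus n (fun s y => rsum k (fun a => F a s y)) (F k));
    [apply IH; intros; apply H; lia | apply H; lia].
Qed.

Section Bump.
Variables (T : R) (n : nat) (t0 : R) (x0 : nat -> R).

Let center (a : nat) : R := pt_coord a t0 x0.

Definition psi (s : R) (y : nat -> R) : R := rsum (S n) (fun a => bump0 (pt_coord a s y - center a)).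
(* Its partial derivatives of orders 1, 2, 3 (only diagonal terms survive). *)
Definition psi1 a s y := bump1 (pt_coord a s y - center a).
Definition psi2 a a' s y := if Nat.eqb a a' then bump2 (pt_coord a s y - center a) else 0.
Definition psi3 a a' a'' s y :=
  if andb (Nat.eqb a a') (Nat.eqb a a'') then bump3 (pt_coord a s y - center a) else 0.

Lemma psi_partial a : (a <= n)%nat -> partial n a psi (psi1 a).
Proof.
  intros Ha s y Hy. unfold psi.
  eapply dpl_eq; [intros hh; symmetry; apply (move_rsum a s y hh (S n)
    (fun a s y => bump0 (pt_coord a s y - center a))) | reflexivity|].
  eapply dpl_eq; [intros; reflexivity | | apply rsum_derive; intros i Hi;
    apply (d_move bump0 bump1 i a s y (center i) d_bump0)].
  unfold psi1. rewrite (rsum_ext _ _ (fun j => if Nat.eqb j a then bump1 (pt_coord a s y - center a) else 0)).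
  - apply rsum_delta; lia.
  - intros i Hi. destruct (Nat.eqb_spec i a); subst; auto.
Qed.

Lemma psi1_partial a a' : partial n a' (psi1 a) (psi2 a a').
Proof. intros s y Hy. apply (d_move bump1 bump2 a a' s y (center a) d_bump1). Qed.

Lemma psi2_partial a a' a'' : partial n a'' (psi2 a a') (psi3 a a' a'').
Proof.
  intros s y Hy. unfold psi2, psi3. destruct (Nat.eqb a a'); simpl.
  - apply (d_move bump2 bump3 a a'' s y (center a) d_bump2).
  - eapply dpl_eq; [| | apply (derivable_pt_lim_const 0 0)]; [intros; rewrite move_const | ]; reflexivity.
Qed.

Lemma psi_contF : contF n psi.
Proof.
  apply (contF_rsum n (S n) (fun a s y => bump0 (pt_coord a s y - center a))).
  intros a Ha. apply (contF_pt_coord n bump0 bump1); [apply d_bump0 | lia].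
Qed.

Lemma psi_derivs_contF a a' a'' : (a <= n)%nat ->
  contF n (psi1 a) /\ contF n (psi2 a a') /\ contF n (psi3 a a' a'').
Proof.
  intros Ha. unfold psi1, psi2, psi3. repeat split.
  - apply (contF_pt_coord n bump1 bump2); auto using d_bump1.
  - destruct (Nat.eqb a a'); [apply (contF_pt_coord n bump2 bump3); auto using d_bump2 | apply contF_const].
  - destruct (andb _ _); [apply (contF_pt_coord n bump3 bump4); auto using d_bump3 | apply contF_const].
Qed.

Lemma C3lb_sub_psi phi D1 D2 D3 : C3lb T n phi D1 D2 D3 ->
  C3lb T n (fun s y => phi s y - psi s y) (fun a s y => D1 a s y - psi1 a s y)
    (fun a a' s y => D2 a a' s y - psi2 a a' s y)
    (fun a a' a'' s y => D3 a a' a'' s y - psi3 a a' a'' s y).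
Proof.
  intros [Hc [H1 [H2 [H3 [M HM]]]]]. unfold coord in *.
  split; [| split; [| split; [| split]]].
  - apply contF_minus; auto. apply psi_contF.
  - intros a Ha. destruct (H1 a Ha) as [Hp Hcc]. split.
    + intros s y Hy. eapply dpl_eq; [intros hh; symmetry; apply move_minus | reflexivity|].
      apply derivable_pt_lim_minus; [apply Hp; auto | apply psi_partial; auto].
    + apply contF_minus; auto. apply (psi_derivs_contF a O O Ha).
  - intros a a' Ha Ha'. destruct (H2 a a' Ha Ha') as [Hp Hcc]. split.
    + intros s y Hy. eapply dpl_eq; [intros hh; symmetry; apply (move_minus a' s y hh (D1 a) (psi1 a)) | reflexivity|].
      apply derivable_pt_lim_minus; [apply Hp; auto | apply psi1_partial; auto].
    + apply contF_minus; auto. apply (psi_derivs_contF a a' O Ha).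
  - intros a a' a'' Ha Ha' Ha''. destruct (H3 a a' a'' Ha Ha' Ha'') as [Hp Hcc]. split.
    + intros s y Hy. eapply dpl_eq; [intros hh; symmetry; apply (move_minus a'' s y hh (D2 a a') (psi2 a a')) | reflexivity|].
      apply derivable_pt_lim_minus; [apply Hp; auto | apply psi2_partial; auto].
    + apply contF_minus; auto. apply (psi_derivs_contF a a' a'' Ha).
  - exists (M + 10). intros a a' a'' Ha Ha' Ha'' s y Hs Hy.
    destruct (HM a a' a'' Ha Ha' Ha'' s y Hs Hy) as [B1 [B2 B3]].
    destruct (bump_derivs_bounded (pt_coord a s y - center a)) as [Q1 [Q2 Q3]].
    assert (Q2' : Rabs (psi2 a a' s y) <= 10)
      by (unfold psi2; destruct (Nat.eqb a a'); [auto | rewrite Rabs_R0; lra]).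
    assert (Q3' : Rabs (psi3 a a' a'' s y) <= 10)
      by (unfold psi3; destruct (andb _ _); [auto | rewrite Rabs_R0; lra]).
    assert (Q1' : Rabs (psi1 a s y) <= 10) by exact Q1.
    unfold Rminus.
    repeat split; (eapply Rle_trans; [apply Rabs_triang|]; rewrite Rabs_Ropp; lra).
Qed.

Lemma psi_center : psi t0 x0 = 0 /\ (forall a, psi1 a t0 x0 = 0) /\ (forall a a', psi2 a a' t0 x0 = 0).
Proof.
  destruct bump_at_0 as [B0 [B1 B2]]. split; [| split].
  - unfold psi. rewrite (rsum_ext _ _ (fun _ => 0)); [apply rsum_zero|].
    intros; rewrite Rminus_diag; apply B0.
  - intros; unfold psi1; rewrite Rminus_diag; apply B1.
  - intros; unfold psi2; destruct (Nat.eqb a a'); auto. rewrite Rminus_diag; apply B2.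
Qed.

Lemma psi_zero s y : Rabs (s - t0) <= 1 -> vdist n y x0 <= 1 -> psi s y <= 0 ->
  s = t0 /\ forall i, (i < n)%nat -> y i = x0 i.
Proof.
  intros Hs Hy Hp.
  assert (Hall : forall a, (a < S n)%nat -> bump0 (pt_coord a s y - center a) = 0).
  { intros a Ha.
    pose proof (rsum_term (S n) (fun a => bump0 (pt_coord a s y - center a)) a
      ltac:(intros; apply bump0_nonneg) Ha).
    pose proof (bump0_nonneg (pt_coord a s y - center a)). unfold psi in Hp. lra. }
  split.
  - pose proof (Hall O ltac:(lia)) as H. unfold center in H; simpl in H.
    assert (s - t0 = 0) by (apply bump0_zero; [auto | lra]). lra.
  - intros i Hi. pose proof (Hall (S i) ltac:(lia)) as H. unfold center in H; simpl in H.
    assert (y i - x0 i = 0); [| lra]. apply bump0_zero; [| lra].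
    eapply Rle_trans; [apply (vdist_coord n y x0 i Hi) | auto].
Qed.
End Bump.

Section ExtremeValue.
Variables (n : nat) (K : R -> (nat -> R) -> Prop) (F : R -> (nat -> R) -> R) (M : R).
Hypothesis K_bounded : forall s y, K s y -> Rabs s <= M /\ forall i, (i < n)%nat -> Rabs (y i) <= M.
Hypothesis K_closed : forall ss ys s0 y0, (forall j, K (ss j) (ys j)) -> vec n y0 ->
  Un_cv ss s0 -> Un_cv (fun k => vdist n (ys k) y0) 0 -> K s0 y0.
Hypothesis F_cont : forall ss ys s y, K s y -> (forall j, K (ss j) (ys j)) -> Un_cv ss s ->
  Un_cv (fun k => vdist n (ys k) y) 0 -> Un_cv (fun k => F (ss k) (ys k)) (F s y).

Lemma K_extract (ps : nat -> R * (nat -> R)) : (forall j, K (fst (ps j)) (snd (ps j))) ->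
  exists sg s0 y0, incr sg /\ K s0 y0 /\
    Un_cv (fun k => F (fst (ps (sg k))) (snd (ps (sg k)))) (F s0 y0).
Proof.
  intros Hps.
  destruct (bw_point n (fun j => fst (ps j)) (fun j => snd (ps j)) M)
    as [sg [s0 [y0 [Hsg [Hy0 [Hs Hy]]]]]].
  - intros j; apply (K_bounded _ _ (Hps j)).
  - intros j i Hi; apply (K_bounded _ _ (Hps j)); auto.
  - assert (K s0 y0) by (apply (K_closed (fun k => fst (ps (sg k))) (fun k => snd (ps (sg k)))); auto).
    exists sg, s0, y0; split; [auto | split; [auto |]].
    apply (F_cont (fun k => fst (ps (sg k))) (fun k => snd (ps (sg k)))); auto.
Qed.

Lemma K_bounded_below : exists m, forall s y, K s y -> m <= F s y.
Proof.
  apply NNPP; intros Hn.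
  assert (Hp : forall j : nat, exists p : R * (nat -> R), K (fst p) (snd p) /\ F (fst p) (snd p) < - INR j).
  { intros j. apply NNPP; intros Hj. apply Hn. exists (- INR j). intros s y Hk.
    apply Rnot_lt_le. intros Hl. apply Hj. exists (s, y); auto. }
  pose (ps := fun j => proj1_sig (constructive_indefinite_description _ (Hp j))).
  assert (Hps : forall j, K (fst (ps j)) (snd (ps j)) /\ F (fst (ps j)) (snd (ps j)) < - INR j).
  { intros j; unfold ps; destruct (constructive_indefinite_description _ (Hp j)); auto. }
  destruct (K_extract ps (fun j => proj1 (Hps j))) as [sg [s0 [y0 [Hsg [Hk Hc]]]]].
  destruct (cv_bounded _ _ Hc) as [B HBd]. destruct (nat_large B) as [k Hk'].
  specialize (HBd k). destruct (Hps (sg k)) as [_ Hl].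
  pose proof (le_INR _ _ (incr_ge sg Hsg k)). apply abs_le in HBd. lra.
Qed.

Lemma extreme_value : (exists s y, K s y) -> exists s y, K s y /\ forall s' y', K s' y' -> F s y <= F s' y'.
Proof.
  intros [s1 [y1 Hk1]]. destruct K_bounded_below as [m Hm].
  set (E := fun w => exists s y, K s y /\ - w = F s y).
  destruct (completeness E) as [S [HS1 HS2]].
  { exists (- m). intros w [s [y [Hk Hw]]]. specialize (Hm s y Hk). lra. }
  { exists (- F s1 y1), s1, y1. split; auto. ring. }
  (* L = - S is the infimum of F on K *)
  set (L := - S).
  assert (HL1 : forall s y, K s y -> L <= F s y).
  { intros s y Hk. assert (E (- F s y)) by (exists s, y; split; auto; ring).
    specialize (HS1 _ H). unfold L; lra. }
  assert (Hp : forall j : nat, exists p : R * (nat -> R), K (fst p) (snd p) /\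
    F (fst p) (snd p) < L + / (INR j + 1)).
  { intros j. apply NNPP; intros Hn.
    assert (S <= S - / (INR j + 1)); [| pose proof (pos_INR j);
      assert (0 < / (INR j + 1)) by (apply Rinv_0_lt_compat; lra); lra].
    apply HS2. intros w [s [y [Hk Hw]]]. apply Rnot_lt_le; intros Hl. apply Hn.
    exists (s, y); split; auto. simpl; unfold L; lra. }
  pose (ps := fun j => proj1_sig (constructive_indefinite_description _ (Hp j))).
  assert (Hps : forall j, K (fst (ps j)) (snd (ps j)) /\ F (fst (ps j)) (snd (ps j)) < L + / (INR j + 1)).
  { intros j; unfold ps; destruct (constructive_indefinite_description _ (Hp j)); auto. }
  destruct (K_extract ps (fun j => proj1 (Hps j))) as [sg [s0 [y0 [Hsg [Hk Hc]]]]].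
  exists s0, y0; split; auto. intros s' y' Hk'.
  assert (F s0 y0 <= L); [| specialize (HL1 s' y' Hk'); lra].
  replace L with (L + 0) by ring.
  apply (cv_le_ev (fun k => F (fst (ps (sg k))) (snd (ps (sg k)))) (fun k => L + / (INR k + 1))); auto.
  - exists O; intros k _. destruct (Hps (sg k)) as [_ Hl].
    pose proof (le_INR _ _ (incr_ge sg Hsg k)).
    assert (/ (INR (sg k) + 1) <= / (INR k + 1)) by (apply Rinv_le_contravar; pose proof (pos_INR k); lra).
    lra.
  - apply CV_plus; [apply cv_const | apply cv_inv].
Qed.
End ExtremeValue.

Definition cyl (T : R) (n : nat) (t : R) (x : nat -> R) (r : R) (s : R) (y : nat -> R) : Prop :=
  0 <= s <= T /\ Rabs (s - t) <= r /\ vec n y /\ vdist n y x <= r.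

Lemma cyl_center T n t x r : 0 <= t <= T -> vec n x -> 0 <= r -> cyl T n t x r t x.
Proof.
  intros Ht Hx Hr. split; [auto | split; [| split; [auto |]]].
  - rewrite Rminus_diag, Rabs_R0; lra.
  - rewrite vdist_self; lra.
Qed.

Lemma cyl_bounded T n t x r s y : cyl T n t x r s y ->
  Rabs s <= T + vnorm n x + r /\ forall i, (i < n)%nat -> Rabs (y i) <= T + vnorm n x + r.
Proof.
  intros [Hs [_ [_ Hy]]].
  assert (0 <= vnorm n x) by (apply rsum_nonneg; intros; apply Rabs_pos).
  pose proof (vdist_nonneg n y x). split.
  - apply Rabs_le; lra.
  - intros i Hi. pose proof (vnorm_coord n x i Hi). pose proof (vdist_coord n y x i Hi).
    pose proof (Rabs_triang (y i - x i) (x i)). replace (y i - x i + x i) with (y i) in * by ring. lra.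
Qed.

Lemma cyl_closed T n t x r ss ys s0 y0 : (forall j, cyl T n t x r (ss j) (ys j)) -> vec n y0 ->
  Un_cv ss s0 -> Un_cv (fun k => vdist n (ys k) y0) 0 -> cyl T n t x r s0 y0.
Proof.
  intros HK Hy0 Hs Hy. split; [split | split; [| split; [auto |]]].
  - apply (cv_le_ev (fun _ => 0) ss); auto; [exists O; intros j _; apply (HK j) | apply cv_const].
  - apply (cv_le_ev ss (fun _ => T)); auto; [exists O; intros j _; apply (HK j) | apply cv_const].
  - apply (cv_le_ev (fun j => Rabs (ss j - t)) (fun _ => r)); [exists O; intros j _; apply (HK j) | | apply cv_const].
    apply (cv_of_bound _ _ (fun j => Rabs (ss j - s0))); [| exact (proj1 (cv_abs0 _ _) Hs)].
    intros; eapply Rle_trans; [apply Rabs_triang_inv2 | right; f_equal; ring].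
  - apply (cv_le_ev (fun _ => vdist n y0 x) (fun j => vdist n (ys j) y0 + r)).
    + exists O; intros j _. pose proof (vdist_tri n y0 (ys j) x).
      rewrite (vdist_sym n y0 (ys j)) in H. destruct (HK j) as [_ [_ [_ H1]]]. lra.
    + apply cv_const.
    + pose proof (CV_plus _ _ _ _ Hy (cv_const r)) as Hc; rewrite Rplus_0_l in Hc; exact Hc.
Qed.

Section MonotoneLimit.
Variables (T : R) (n : nat) (W : nat -> R -> (nat -> R) -> R) (Wt : R -> (nat -> R) -> R).
Hypothesis Wcont : forall m, contD T n (W m).
Hypothesis Wmono : forall m t x, 0 <= t <= T -> vec n x -> W m t x <= W (S m) t x.
Hypothesis Wlim : forall t x, 0 <= t <= T -> vec n x -> Un_cv (fun m => W m t x) (Wt t x).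

Lemma W_mono_le k m : (k <= m)%nat -> forall t x, 0 <= t <= T -> vec n x -> W k t x <= W m t x.
Proof.
  intros Hkm t x Ht Hx. induction Hkm as [|m Hkm IH]; [lra|].
  specialize (Wmono m t x Ht Hx). lra.
Qed.

Lemma W_le_Wt k t x : 0 <= t <= T -> vec n x -> W k t x <= Wt t x.
Proof.
  intros Ht Hx. apply (cv_le_ev (fun _ => W k t x) (fun m => W m t x));
    [| apply cv_const | apply Wlim; auto].
  exists k; intros j Hj; apply W_mono_le; auto.
Qed.

(* A supremum of continuous functions is lower semicontinuous. *)
Lemma Wt_lsc : lsc T n Wt.
Proof.
  intros t x Ht Hx eps He.
  destruct (Wlim t x Ht Hx (eps/2) ltac:(lra)) as [k Hk]. specialize (Hk k (le_n k)).
  unfold R_dist in Hk. apply abs_lt in Hk.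
  destruct (Wcont k t x Ht Hx (eps/2) ltac:(lra)) as [del [Hd H]]. exists del; split; auto.
  intros s y Hs Hy Hst Hyx. specialize (H s y Hs Hy Hst Hyx). apply abs_lt in H.
  pose proof (W_le_Wt k s y Hs Hy). lra.
Qed.

Section Minimizers.
Variables (t : R) (x : nat -> R) (r : R) (zeta : R -> (nat -> R) -> R).
Hypotheses (Ht : 0 <= t <= T) (Hx : vec n x) (Hr : 0 <= r) (Hzeta : contF n zeta).
Let K := cyl T n t x r.

Definition minimizes (m : nat) (s : R) (y : nat -> R) : Prop :=
  K s y /\ forall s' y', K s' y' -> W m s y - zeta s y <= W m s' y' - zeta s' y'.

Lemma minimizer_exists m : exists p : R * (nat -> R), minimizes m (fst p) (snd p).
Proof.
  destruct (extreme_value n K (fun s y => W m s y - zeta s y) (T + vnorm n x + r)) as [s [y [Hk Hm]]].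
  - apply cyl_bounded.
  - apply cyl_closed.
  - intros ss ys s y [Hs [_ [Hy _]]] HKs Cs Cy. apply CV_minus.
    + apply (contD_seq T n (W m)); auto; intros j; apply (HKs j).
    + apply (contF_seq n zeta); auto. intros j; apply (HKs j).
  - exists t, x; apply cyl_center; auto.
  - exists (s, y); split; auto.
Qed.

Section Subsequence.
Variables (sg : nat -> nat) (Sk : nat -> R) (Yk : nat -> nat -> R).
Hypotheses (Hsg : incr sg) (Hmin : forall k, minimizes (sg k) (Sk k) (Yk k)).

(* Minimality against the center, combined with W_m <= Wt. *)
Lemma minimizer_upper k : W (sg k) (Sk k) (Yk k) <= Wt t x - zeta t x + zeta (Sk k) (Yk k).
Proof.
  destruct (Hmin k) as [_ Hm]. specialize (Hm t x (cyl_center T n t x r Ht Hx Hr)).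
  pose proof (W_le_Wt (sg k) t x Ht Hx). lra.
Qed.

Lemma minimizer_limit s0 y0 : vec n y0 -> Un_cv Sk s0 -> Un_cv (fun k => vdist n (Yk k) y0) 0 ->
  Wt s0 y0 - zeta s0 y0 <= Wt t x - zeta t x.
Proof.
  intros Hy0 Cs Cy.
  assert (HK : forall k, K (Sk k) (Yk k)) by (intros; apply Hmin).
  assert (Hk0 : K s0 y0) by (apply (cyl_closed T n t x r Sk Yk); auto).
  assert (HYk : forall k, vec n (Yk k)) by (intros; apply HK).
  assert (HSk : forall k, 0 <= Sk k <= T) by (intros; apply HK).
  destruct Hk0 as [Hs0 [_ [_ _]]].
  assert (Hz : Un_cv (fun k => zeta (Sk k) (Yk k)) (zeta s0 y0)) by (apply (contF_seq n); auto).
  (* for fixed j, W_j <= W_(sg k) eventually, then pass to the limit in k, then in j *)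
  assert (Hj : forall j, W j s0 y0 <= Wt t x - zeta t x + zeta s0 y0).
  { intros j. apply (cv_le_ev (fun k => W j (Sk k) (Yk k)) (fun k => Wt t x - zeta t x + zeta (Sk k) (Yk k))).
    - exists j; intros k Hk. eapply Rle_trans; [| apply minimizer_upper].
      apply W_mono_le; auto. pose proof (incr_ge sg Hsg k); lia.
    - apply (contD_seq T n (W j)); auto.
    - apply CV_plus; auto. apply cv_const. }
  assert (Wt s0 y0 <= Wt t x - zeta t x + zeta s0 y0); [| lra].
  apply (cv_le_ev (fun j => W j s0 y0) (fun _ => Wt t x - zeta t x + zeta s0 y0)).
  - exists O; intros; apply Hj.
  - apply Wlim; auto.
  - apply cv_const.
Qed.

Lemma minimizer_values_cv : Un_cv Sk t -> Un_cv (fun k => vdist n (Yk k) x) 0 ->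
  Un_cv (fun k => W (sg k) (Sk k) (Yk k)) (Wt t x).
Proof.
  intros Cs Cy e He.
  assert (HK : forall k, K (Sk k) (Yk k)) by (intros; apply Hmin).
  assert (Hz : Un_cv (fun k => zeta (Sk k) (Yk k)) (zeta t x))
    by (apply (contF_seq n); auto; intros; apply HK).
  destruct (Wlim t x Ht Hx (e/2) ltac:(lra)) as [N1 HN1]. specialize (HN1 N1 (le_n N1)).
  unfold R_dist in HN1. apply abs_lt in HN1.
  destruct (contD_seq T n (W N1) Sk Yk t x (Wcont N1) Ht Hx ltac:(intros; apply HK)
    ltac:(intros; apply HK) Cs Cy (e/2) ltac:(lra)) as [N2 HN2].
  destruct (Hz (e/2) ltac:(lra)) as [N3 HN3].
  exists (max N1 (max N2 N3)); intros k Hk. specialize (HN2 k ltac:(lia)). specialize (HN3 k ltac:(lia)).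
  unfold R_dist in *. apply abs_lt in HN2. apply abs_lt in HN3.
  pose proof (minimizer_upper k).
  assert (W N1 (Sk k) (Yk k) <= W (sg k) (Sk k) (Yk k)).
  { apply W_mono_le; try apply HK. pose proof (incr_ge sg Hsg k); lia. }
  apply Rabs_def1; lra.
Qed.
End Subsequence.

Lemma minimizers_converge :
  (forall s y, K s y -> Wt s y - zeta s y <= Wt t x - zeta t x -> s = t /\ y = x) ->
  exists sg Sk Yk, incr sg /\ (forall k, minimizes (sg k) (Sk k) (Yk k)) /\
    Un_cv Sk t /\ Un_cv (fun k => vdist n (Yk k) x) 0 /\
    Un_cv (fun k => W (sg k) (Sk k) (Yk k)) (Wt t x).
Proof.
  intros Hstrict.
  pose (ps := fun m => proj1_sig (constructive_indefinite_description _ (minimizer_exists m))).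
  assert (Hps : forall m, minimizes m (fst (ps m)) (snd (ps m))).
  { intros m; unfold ps; destruct (constructive_indefinite_description _ (minimizer_exists m)); auto. }
  destruct (bw_point n (fun j => fst (ps j)) (fun j => snd (ps j)) (T + vnorm n x + r))
    as [sg [s0 [y0 [Hsg [Hy0 [Cs Cy]]]]]];
    [intros j; apply (cyl_bounded T n t x r _ _ (proj1 (Hps j)))
    | intros j i Hi; apply (cyl_bounded T n t x r _ _ (proj1 (Hps j))); auto |].
  pose (Sk := fun k => fst (ps (sg k))). pose (Yk := fun k => snd (ps (sg k))).
  assert (Hmin : forall k, minimizes (sg k) (Sk k) (Yk k)) by (intros; apply Hps).
  assert (Hk0 : K s0 y0) by (apply (cyl_closed T n t x r Sk Yk); auto; intros; apply Hmin).
  destruct (Hstrict s0 y0 Hk0 (minimizer_limit sg Sk Yk Hsg Hmin s0 y0 Hy0 Cs Cy)) as [-> ->].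
  exists sg, Sk, Yk. do 4 (split; auto). apply minimizer_values_cv; auto.
Qed.
End Minimizers.
End MonotoneLimit.

Lemma negpart_nonneg a : 0 <= negpart a.
Proof. apply Rmax_l. Qed.

Lemma negpart_lip a b : Rabs (negpart a - negpart b) <= Rabs (a - b).
Proof.
  unfold negpart, Rmax. pose proof (RRle_abs (a - b)); pose proof (RRle_abs (b - a)).
  rewrite Rabs_minus_sym in H0.
  destruct (Rle_dec 0 (-a)); destruct (Rle_dec 0 (-b)); apply Rabs_le; lra.
Qed.

(* If m_k c_k <= a_k with c_k >= 0, m_k >= k, a_k -> A and c_k -> C,
   then A >= 0 and C <= 0: the penalized quantity c_k is O(1/k). *)
Lemma penalty_limit (mk : nat -> nat) (c a : nat -> R) A C :
  (forall k, (k <= mk k)%nat) -> (forall k, 0 <= c k) -> Un_cv a A -> Un_cv c C ->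
  (exists N, forall k, (N <= k)%nat -> INR (mk k) * c k <= a k) -> 0 <= A /\ C <= 0.
Proof.
  intros Hmk Hc Ca Cc [N HN]. split.
  - apply (cv_le_ev (fun _ => 0) a); auto; [| apply cv_const].
    exists N; intros k Hk. eapply Rle_trans; [| apply HN; auto].
    apply Rmult_le_pos; [apply pos_INR | auto].
  - destruct (cv_bounded _ _ Ca) as [B HB]. replace 0 with (2 * B * 0) by ring.
    apply (cv_le_ev c (fun k => 2 * B * / (INR k + 1))); auto;
      [| apply CV_mult; [apply cv_const | apply cv_inv]].
    exists (max N 1); intros k Hk. specialize (HN k ltac:(lia)). specialize (HB k).
    apply abs_le in HB. pose proof (le_INR _ _ (Hmk k)). pose proof (Hc k).
    assert (1 <= INR k) by (replace 1 with (INR 1) by reflexivity; apply le_INR; lia).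
    assert (c k * (INR k + 1) <= 2 * B) by nra.
    replace (c k) with (c k * (INR k + 1) * / (INR k + 1)) by (field; lra).
    apply Rmult_le_compat_r; [apply Rlt_le, Rinv_0_lt_compat |]; lra.
Qed.

Section Supersolution.
Context {U V : Type} (dU : U -> U -> R) (dV : V -> V -> R) (T : R) (n d : nat)
  (b : R -> (nat -> R) -> U -> V -> (nat -> R))
  (sig : R -> (nat -> R) -> U -> V -> nat -> nat -> R)
  (f : R -> (nat -> R) -> R -> (nat -> R) -> U -> V -> R)
  (Phi : (nat -> R) -> R) (h : R -> (nat -> R) -> R)
  (W : nat -> R -> (nat -> R) -> R) (Wt : R -> (nat -> R) -> R).
Hypotheses (HU : compact_metric_space U dU) (HV : compact_metric_space V dV).
Hypothesis Hbc : forall x, vec n x -> forall t u v, 0 <= t <= T -> forall eps, eps > 0 ->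
  exists del, del > 0 /\ forall t' u' v', 0 <= t' <= T -> Rabs (t' - t) < del ->
    dU u' u < del -> dV v' v < del ->
    vdist n (b t' x u' v') (b t x u v) < eps /\ mdist n d (sig t' x u' v') (sig t x u v) < eps.
Variable Lb : R.
Hypothesis Hbl : forall t x x' u v, 0 <= t <= T -> vec n x -> vec n x' ->
  vdist n (b t x u v) (b t x' u v) <= Lb * vdist n x x' /\
  mdist n d (sig t x u v) (sig t x' u v) <= Lb * vdist n x x'.
Hypothesis Hfc : forall x y z, vec n x -> vec d z -> forall t u v, 0 <= t <= T ->
  forall eps, eps > 0 -> exists del, del > 0 /\ forall t' u' v', 0 <= t' <= T ->
    Rabs (t' - t) < del -> dU u' u < del -> dV v' v < del ->
    Rabs (f t' x y z u' v' - f t x y z u v) < eps.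
Variable Lf : R.
Hypothesis Hfl : forall t x x' y y' z z' u v, 0 <= t <= T -> vec n x -> vec n x' ->
  vec d z -> vec d z' ->
  Rabs (f t x y z u v - f t x' y' z' u v) <= Lf * (vdist n x x' + Rabs (y - y') + vdist d z z').
Hypothesis Hhc : forall x, vec n x -> forall t, 0 <= t <= T -> forall eps, eps > 0 ->
  exists del, del > 0 /\ forall t', 0 <= t' <= T -> Rabs (t' - t) < del -> Rabs (h t' x - h t x) < eps.
Variable Lh : R.
Hypothesis Hhl : forall t x x', 0 <= t <= T -> vec n x -> vec n x' ->
  Rabs (h t x - h t x') <= Lh * vdist n x x'.
Hypothesis Wcont : forall m, contD T n (W m).
Hypothesis Wmono : forall m t x, 0 <= t <= T -> vec n x -> W m t x <= W (S m) t x.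
Hypothesis Wsol : forall m, @visc_sol_pen U V T n d b sig f Phi h m (W m).
Hypothesis Wlim : forall t x, 0 <= t <= T -> vec n x -> Un_cv (fun m => W m t x) (Wt t x).

Lemma obstacle_cv ss ys t x : 0 <= t <= T -> vec n x -> (forall k, 0 <= ss k <= T) -> (forall k, vec n (ys k)) ->
  Un_cv ss t -> Un_cv (fun k => vdist n (ys k) x) 0 -> Un_cv (fun k => h (ss k) (ys k)) (h t x).
Proof.
  intros Ht Hx Hss Hys Cs Cy.
  apply (cv_of_bound _ _ (fun k => Lh * vdist n (ys k) x + Rabs (h (ss k) x - h t x))).
  - intros k. replace (h (ss k) (ys k) - h t x) with ((h (ss k) (ys k) - h (ss k) x) + (h (ss k) x - h t x)) by ring.
    eapply Rle_trans; [apply Rabs_triang|]. apply Rplus_le_compat_r. apply Hhl; auto.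
  - apply cv_lin2; auto. intros e He. destruct (Hhc x Hx t Ht e He) as [dl [Hdl Hh]].
    destruct (Cs dl Hdl) as [N HN]. exists N; intros k Hk. unfold R_dist.
    rewrite Rminus_0_r, Rabs_Rabsolu. apply Hh; auto. apply HN; auto.
Qed.

Lemma bump_strict_min phi t x del r : vec n x ->
  (forall s y, 0 <= s <= T -> vec n y -> Rabs (s - t) < del -> vdist n y x < del ->
     Wt t x - phi t x <= Wt s y - phi s y) ->
  r < del -> r <= 1 ->
  forall s y, cyl T n t x r s y ->
    Wt s y - (phi s y - psi n t x s y) <= Wt t x - (phi t x - psi n t x t x) -> s = t /\ y = x.
Proof.
  intros Hx Hmin Hrdel Hr1 s y [Hs [Hst [Hy Hyx]]] Hle.
  pose proof (Hmin s y Hs Hy ltac:(lra) ltac:(lra)).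
  destruct (psi_center n t x) as [Hc _].
  destruct (psi_zero n t x s y) as [-> Hyi]; [lra | lra | lra |].
  split; auto. apply functional_extensionality; intros i.
  destruct (Nat.ltb_spec i n); [auto | rewrite Hy, Hx; auto].
Qed.

(* At an interior minimizer of W_m - (phi - psi), the viscosity supersolution
   property of W_m gives the penalized inequality. *)
Lemma penalized_ineq phi D1 D2 D3 t x r m s y : C3lb T n phi D1 D2 D3 -> t + r < T ->
  minimizes T n W t x r (fun s y => phi s y - psi n t x s y) m s y ->
  Rabs (s - t) < r / 2 -> vdist n y x < r / 2 ->
  INR m * negpart (W m s y - h s y) <=
    - (D1 O s y - psi1 t x O s y)
    - @Hminus U V n d b sig f s y (W m s y) (fun i => D1 (S i) s y - psi1 t x (S i) s y)
        (fun i j => D2 (S i) (S j) s y - psi2 t x (S i) (S j) s y).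
Proof.
  intros HC Htr [[Hs [_ [Hy _]]] Hmin] Hst Hyx.
  assert (Hloc : loc_min T n (fun s' y' => W m s' y' - (phi s' y' - psi n t x s' y')) s y).
  { exists (r / 2); split; [pose proof (Rabs_pos (s - t)); lra|].
    intros s' y' Hs' Hy' Hd1 Hd2. apply Hmin. split; [auto | split; [| split; [auto |]]].
    - pose proof (Rabs_triang (s' - s) (s - t)). replace (s' - s + (s - t)) with (s' - t) in * by ring. lra.
    - pose proof (vdist_tri n y' y x). lra. }
  destruct (Wsol m) as [_ [_ Hsuper]].
  assert (Hs' : 0 <= s < T) by (apply abs_lt in Hst; lra).
  pose proof (Hsuper _ _ _ _ (C3lb_sub_psi T n t x phi D1 D2 D3 HC) s y Hs' Hy Hloc) as H.
  rewrite (Hpen_shift dU dV T n d b sig f HU HV Hbc Lb Hbl Hfc Lf Hfl) in H by auto.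
  cbv beta in H. lra.
Qed.

Lemma penalized_rhs_cv phi D1 D2 D3 t x (Sk : nat -> R) (Yk : nat -> nat -> R) (wk : nat -> R) :
  C3lb T n phi D1 D2 D3 -> 0 <= t <= T -> vec n x ->
  (forall k, 0 <= Sk k <= T) -> (forall k, vec n (Yk k)) ->
  Un_cv Sk t -> Un_cv (fun k => vdist n (Yk k) x) 0 -> Un_cv wk (Wt t x) ->
  Un_cv (fun k => - (D1 O (Sk k) (Yk k) - psi1 t x O (Sk k) (Yk k))
    - @Hminus U V n d b sig f (Sk k) (Yk k) (wk k)
        (fun i => D1 (S i) (Sk k) (Yk k) - psi1 t x (S i) (Sk k) (Yk k))
        (fun i j => D2 (S i) (S j) (Sk k) (Yk k) - psi2 t x (S i) (S j) (Sk k) (Yk k)))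
    (- D1 O t x - @Hminus U V n d b sig f t x (Wt t x) (fun i => D1 (S i) t x)
        (fun i j => D2 (S i) (S j) t x)).
Proof.
  intros HC Ht Hx HSk HYk Cs Cy Cw.
  destruct (C3lb_sub_psi T n t x phi D1 D2 D3 HC) as [_ [H1 [H2 _]]].
  destruct (psi_center n t x) as [_ [P1 P2]].
  assert (D1cv : forall a, (a <= n)%nat ->
    Un_cv (fun k => D1 a (Sk k) (Yk k) - psi1 t x a (Sk k) (Yk k)) (D1 a t x)).
  { intros a Ha. replace (D1 a t x) with (D1 a t x - psi1 t x a t x) by (rewrite P1; ring).
    apply (contF_seq n (fun s y => D1 a s y - psi1 t x a s y)); auto. apply H1; auto. }
  assert (D2cv : forall i j, (i < n)%nat -> (j < n)%nat ->
    Un_cv (fun k => D2 (S i) (S j) (Sk k) (Yk k) - psi2 t x (S i) (S j) (Sk k) (Yk k)) (D2 (S i) (S j) t x)).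
  { intros i j Hi Hj.
    replace (D2 (S i) (S j) t x) with (D2 (S i) (S j) t x - psi2 t x (S i) (S j) t x) by (rewrite P2; ring).
    apply (contF_seq n (fun s y => D2 (S i) (S j) s y - psi2 t x (S i) (S j) s y)); auto.
    apply H2; unfold coord; lia. }
  apply CV_minus; [apply CV_opp, D1cv; lia|].
  apply (Hminus_cv dU dV T n d b sig f HU HV Hbc Lb Hbl Hfc Lf Hfl); auto.
Qed.

Lemma Wt_supersolution_ineq phi D1 D2 D3 t x : C3lb T n phi D1 D2 D3 -> 0 <= t < T -> vec n x ->
  loc_min T n (fun s y => Wt s y - phi s y) t x ->
  Rmin (Wt t x - h t x)
    (- D1 O t x - @Hminus U V n d b sig f t x (Wt t x) (fun i => D1 (S i) t x)
        (fun i j => D2 (S i) (S j) t x)) >= 0.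
Proof.
  intros HC Ht Hx [del [Hdel Hmin]].
  (* a small cylinder inside the neighbourhood, away from the terminal time *)
  set (r := Rmin (Rmin (del / 2) ((T - t) / 2)) 1).
  assert (Hr : 0 < r /\ r < del /\ t + r < T /\ r <= 1).
  { assert (0 < r) by (repeat apply Rmin_pos; lra). unfold r in *.
    pose proof (Rmin_l (Rmin (del / 2) ((T - t) / 2)) 1); pose proof (Rmin_r (Rmin (del / 2) ((T - t) / 2)) 1).
    pose proof (Rmin_l (del / 2) ((T - t) / 2)); pose proof (Rmin_r (del / 2) ((T - t) / 2)). lra. }
  destruct Hr as [Hr0 [Hrdel [HrT Hr1]]].
  assert (Ht' : 0 <= t <= T) by lra.
  set (zeta := fun s y => phi s y - psi n t x s y).
  destruct (minimizers_converge T n W Wt Wcont Wmono Wlim t x r zeta Ht' Hx ltac:(lra)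
    ltac:(apply (C3lb_sub_psi T n t x phi D1 D2 D3 HC))
    (bump_strict_min phi t x del r Hx Hmin Hrdel Hr1))
    as [sg [Sk [Yk [Hsg [Hmk [Cs [Cy CW]]]]]]].
  assert (HSk : forall k, 0 <= Sk k <= T) by (intros; apply Hmk).
  assert (HYk : forall k, vec n (Yk k)) by (intros; apply Hmk).
  pose proof (penalized_rhs_cv phi D1 D2 D3 t x Sk Yk _ HC Ht' Hx HSk HYk Cs Cy CW) as Crhs.
  assert (Cneg : Un_cv (fun k => negpart (W (sg k) (Sk k) (Yk k) - h (Sk k) (Yk k)))
    (negpart (Wt t x - h t x))).
  { apply (cv_of_bound _ _ (fun k => Rabs ((W (sg k) (Sk k) (Yk k) - h (Sk k) (Yk k)) - (Wt t x - h t x)))).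
    - intros; apply negpart_lip.
    - apply (proj1 (cv_abs0 _ _)), CV_minus; auto. apply obstacle_cv; auto. }
  destruct (penalty_limit sg _ _ _ _ (incr_ge sg Hsg) (fun k => negpart_nonneg _) Crhs Cneg)
    as [HA Hneg].
  - (* eventually the minimizers are interior points of the cylinder *)
    destruct (Cs (r / 2) ltac:(lra)) as [Na HNa]. destruct (Cy (r / 2) ltac:(lra)) as [Nb HNb].
    exists (max Na Nb); intros k Hk.
    specialize (HNa k ltac:(lia)); specialize (HNb k ltac:(lia)). unfold R_dist in *.
    rewrite Rminus_0_r, Rabs_right in HNb by (apply Rle_ge, vdist_nonneg).
    apply (penalized_ineq phi D1 D2 D3 t x r); auto.
  - assert (- (Wt t x - h t x) <= negpart (Wt t x - h t x)) by apply Rmax_r.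
    apply Rle_ge, Rmin_glb; lra.
Qed.
End Supersolution.

Theorem proposition4p1 (T : R) (n d : nat) (U V : Type)
  (dU : U -> U -> R) (dV : V -> V -> R)
  (b : R -> (nat -> R) -> U -> V -> (nat -> R))
  (sig : R -> (nat -> R) -> U -> V -> nat -> nat -> R)
  (f : R -> (nat -> R) -> R -> (nat -> R) -> U -> V -> R)
  (Phi : (nat -> R) -> R) (h : R -> (nat -> R) -> R)
  (W : nat -> R -> (nat -> R) -> R) (Wt : R -> (nat -> R) -> R) :
  0 < T ->
  compact_metric_space U dU -> compact_metric_space V dV ->
  H3_1 T n d U V dU dV b sig ->
  H3_2 T n d U V dU dV f Phi h ->
  (forall m, contD T n (W m)) ->
  (forall m, lin_growth T n (W m)) ->
  (forall m t x, 0 <= t <= T -> vec n x -> W m t x <= W (S m) t x) ->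
  (forall m, @visc_sol_pen U V T n d b sig f Phi h m (W m)) ->
  (forall t x, 0 <= t <= T -> vec n x -> Un_cv (fun m => W m t x) (Wt t x)) ->
  lin_growth T n Wt ->
  @visc_super_obst U V T n d b sig f Phi h Wt.
Proof.
  intros HT HU HV [Hbc [Lb Hbl]] [Hfc [[Lf Hfl] [_ [Hhc [[Lh Hhl] _]]]]]
    Wcont _ Wmono Wsol Wlim _.
  split; [| split].
  - exact (Wt_lsc T n W Wt Wcont Wmono Wlim).
  - (* every W_m equals Phi at the terminal time, hence so does the limit *)
    intros x Hx. right. apply (UL_sequence (fun m => W m T x)); [apply Wlim; auto; lra|].
    apply (cv_of_bound _ _ (fun _ => 0)); [| apply cv_const].
    intros m. destruct (Wsol m) as [HT' _]. rewrite HT', Rminus_diag, Rabs_R0 by auto. lra.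
  - intros phi D1 D2 D3 Hphi t x Ht Hx Hmin.
    exact (Wt_supersolution_ineq dU dV T n d b sig f Phi h W Wt HU HV Hbc Lb Hbl Hfc Lf Hfl
      Hhc Lh Hhl Wcont Wmono Wsol Wlim phi D1 D2 D3 t x Hphi Ht Hx Hmin).
Qed.
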